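(* Let $\Omega\subset\mathbb{R}^n$ be a bounded open convex set with smooth boundary. If for some $\Lambda>0$ problem $(N_\Lambda)$ admits a nonconstant continuous viscosity solution $u$, then $\Lambda\ge\frac{2}{\operatorname{diam}(\Omega)}$.
   Context: $\operatorname{diam}(\Omega)=\sup_{x,y\in\Omega}|x-y|$. $\nu$ denotes the outer unit normal to $\partial\Omega$, and $\Delta_\infty u=\sum_{i,j=1}^n u_{x_i}u_{x_ix_j}u_{x_j}$. For $\Lambda\ge 0$, problem $(N_\Lambda)$ is $$\min\{|\nabla u|-\Lambda|u|,-\Delta_\infty u\}=0 \text{ in }\{u>0\}\cap\Omega,\quad \max\{\Lambda|u|-|\nabla u|,-\Delta_\infty u\}=0 \text{ in }\{u<0\}\cap\Omega,\quad -\Delta_\infty u=0 \text{ in }\{u=0\}\cap\Omega,\quad \tfrac{\partial u}{\partial\nu}=0 \text{ on }\partial\Omega,$$ understood in the viscosity sense as follows. For $s\in\mathbb{R}$, $\xi\in\mathbb{R}^n$, $X$ a symmetric $n\times n$ matrix, let $F(s,\xi,X)=\min\{|\xi|-\Lambda|s|,-\langle X\xi,\xi\rangle\}$, $G(s,\xi,X)=\max\{\Lambda|s|-|\xi|,-\langle X\xi,\xi\rangle\}$, $H(X)=-\langle X\xi,\xi\rangle$ (evaluated at the same $\xi$). For a function $u$ and point $x_0$, let $E$ denote $F$ if $u(x_0)>0$, $G$ if $u(x_0)<0$, $H$ if $u(x_0)=0$. An upper semicontinuous $u$ on $\overline\Omega$ is a viscosity subsolution if: for every $x_0\in\Omega$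 and $\phi\in C^2(\Omega)$ with $\phi(x_0)=u(x_0)$ and $u(x)<\phi(x)$ for $x\neq x_0$, one has $E(\phi(x_0),\nabla\phi(x_0),\nabla^2\phi(x_0))\le 0$; and for every $x_0\in\partial\Omega$ and $\phi\in C^2(\overline\Omega)$ with the same touching property, $\min\{E(\phi(x_0),\nabla\phi(x_0),\nabla^2\phi(x_0)),\frac{\partial\phi}{\partial\nu}(x_0)\}\le 0$. A lower semicontinuous $u$ is a viscosity supersolution if the same holds with $u(x)>\phi(x)$ for $x\ne x_0$, with ''$E\le 0$'' replaced by ''$E\ge 0$'' at interior points and with $\max\{E(\phi(x_0),\nabla\phi(x_0),\nabla^2\phi(x_0)),\frac{\partial\phi}{\partial\nu}(x_0)\}\ge 0$ at boundary points. A continuous $u$ is a viscosity solution if it is both a sub- and a supersolution. *)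

(* classical reals. Points of R^n are represented as
   functions nat -> R vanishing at indices >= n (predicate inRn). *)
From Stdlib Require Import Reals List.
Open Scope R_scope.

Definition pt := nat -> R.

Fixpoint rsum (n : nat) (f : nat -> R) : R :=
  match n with O => 0 | S k => rsum k f + f k end.

Definition dot (n : nat) (x y : pt) : R := rsum n (fun i => x i * y i).
Definition nrm (n : nat) (x : pt) : R := sqrt (dot n x x).
Definition vsub (x y : pt) : pt := fun i => x i - y i.
Definition distn (n : nat) (x y : pt) : R := nrm n (vsub x y).

Definition inRn (n : nat) (x : pt) : Prop := forall i, (n <= i)%nat -> x i = 0.

Definition open_in_Rn (n : nat) (U : pt -> Prop) : Prop :=
  (forall x, U x -> inRn n x) /\
  forall x, U x -> exists r, 0 < r /\ forall y, inRn n y -> distn n y x < r -> U y.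

Definition bounded_in_Rn (n : nat) (U : pt -> Prop) : Prop :=
  exists M, forall x, U x -> nrm n x <= M.

Definition convex_in_Rn (n : nat) (U : pt -> Prop) : Prop :=
  forall x y t, U x -> U y -> 0 <= t <= 1 -> U (fun i => (1 - t) * x i + t * y i).

Definition clos_in_Rn (n : nat) (U : pt -> Prop) (x : pt) : Prop :=
  inRn n x /\ forall eps, 0 < eps -> exists y, U y /\ distn n y x < eps.

Definition bdry_in_Rn (n : nat) (U : pt -> Prop) (x : pt) : Prop :=
  clos_in_Rn n U x /\ ~ U x.

Definition frechet (n : nat) (f : pt -> R) (x : pt) (g : pt) : Prop :=
  forall eps, 0 < eps -> exists delta, 0 < delta /\
    forall y, inRn n y -> distn n y x < delta ->
      Rabs (f y - f x - dot n g (vsub y x)) <= eps * distn n y x.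

Definition cont_at (n : nat) (V : pt -> Prop) (f : pt -> R) (x : pt) : Prop :=
  forall eps, 0 < eps -> exists delta, 0 < delta /\
    forall y, V y -> distn n y x < delta -> Rabs (f y - f x) < eps.

Definition C2_on (n : nat) (U : pt -> Prop) (phi : pt -> R)
    (G : pt -> pt) (H : pt -> nat -> nat -> R) : Prop :=
  forall x, U x ->
    frechet n phi x (G x) /\
    (forall i, (i < n)%nat -> frechet n (fun y => G y i) x (H x i)) /\
    (forall i j, (i < n)%nat -> (j < n)%nat -> cont_at n (inRn n) (fun y => H y i j) x).

(* f is C^infinity on R^n: D l is the iterated partial derivative along the
   multi-index l (D nil = f), each D l Frechet differentiable with partials D (i::l) *)
Definition smooth_fam (n : nat) (f : pt -> R) (D : list nat -> pt -> R) : Prop :=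
  (forall x, D nil x = f x) /\
  forall l x, inRn n x -> frechet n (D l) x (fun i => D (i :: l) x).

(* rho is a smooth global defining function of Om:  Om = {rho < 0},
   grad rho <> 0 on the bdry_in_Rn of Om  (i.e. Om has smooth bdry_in_Rn) *)
Definition defining_fn (n : nat) (Om : pt -> Prop) (rho : pt -> R)
    (D : list nat -> pt -> R) : Prop :=
  smooth_fam n rho D /\
  (forall x, inRn n x -> (Om x <-> rho x < 0)) /\
  (forall x, bdry_in_Rn n Om x -> nrm n (fun i => D (i :: nil) x) <> 0).

Definition outer_normal (n : nat) (D : list nat -> pt -> R) (x : pt) : pt :=
  fun i => D (i :: nil) x / nrm n (fun j => D (j :: nil) x).

Definition qf (n : nat) (X : nat -> nat -> R) (xi : pt) : R :=
  rsum n (fun i => rsum n (fun j => X i j * xi i * xi j)).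

Definition Fop (n : nat) (lam s : R) (xi : pt) (X : nat -> nat -> R) : R :=
  Rmin (nrm n xi - lam * Rabs s) (- qf n X xi).
Definition Gop (n : nat) (lam s : R) (xi : pt) (X : nat -> nat -> R) : R :=
  Rmax (lam * Rabs s - nrm n xi) (- qf n X xi).
Definition Hop (n : nat) (xi : pt) (X : nat -> nat -> R) : R := - qf n X xi.

(* E, selected by the sign of s = u(x0) = phi(x0) *)
Definition Eop (n : nat) (lam s : R) (xi : pt) (X : nat -> nat -> R) : R :=
  if Rlt_dec 0 s then Fop n lam s xi X
  else if Rlt_dec s 0 then Gop n lam s xi X
  else Hop n xi X.

Definition usc_on (n : nat) (V : pt -> Prop) (u : pt -> R) : Prop :=
  forall x, V x -> forall eps, 0 < eps -> exists delta, 0 < delta /\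
    forall y, V y -> distn n y x < delta -> u y < u x + eps.
Definition lsc_on (n : nat) (V : pt -> Prop) (u : pt -> R) : Prop :=
  forall x, V x -> forall eps, 0 < eps -> exists delta, 0 < delta /\
    forall y, V y -> distn n y x < delta -> u x - eps < u y.

Definition visc_sub (n : nat) (Om : pt -> Prop) (lam : R) (nu : pt -> pt) (u : pt -> R) : Prop :=
  usc_on n (clos_in_Rn n Om) u /\
  (forall x0 phi G H, Om x0 -> C2_on n Om phi G H -> phi x0 = u x0 ->
     (forall x, Om x -> x <> x0 -> u x < phi x) ->
     Eop n lam (phi x0) (G x0) (H x0) <= 0) /\
  (forall x0 (V : pt -> Prop) phi G H, bdry_in_Rn n Om x0 ->
     open_in_Rn n V -> (forall x, clos_in_Rn n Om x -> V x) -> C2_on n V phi G H ->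
     phi x0 = u x0 ->
     (forall x, clos_in_Rn n Om x -> x <> x0 -> u x < phi x) ->
     Rmin (Eop n lam (phi x0) (G x0) (H x0)) (dot n (G x0) (nu x0)) <= 0).

Definition visc_super (n : nat) (Om : pt -> Prop) (lam : R) (nu : pt -> pt) (u : pt -> R) : Prop :=
  lsc_on n (clos_in_Rn n Om) u /\
  (forall x0 phi G H, Om x0 -> C2_on n Om phi G H -> phi x0 = u x0 ->
     (forall x, Om x -> x <> x0 -> u x > phi x) ->
     Eop n lam (phi x0) (G x0) (H x0) >= 0) /\
  (forall x0 (V : pt -> Prop) phi G H, bdry_in_Rn n Om x0 ->
     open_in_Rn n V -> (forall x, clos_in_Rn n Om x -> V x) -> C2_on n V phi G H ->
     phi x0 = u x0 ->
     (forall x, clos_in_Rn n Om x -> x <> x0 -> u x > phi x) ->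
     Rmax (Eop n lam (phi x0) (G x0) (H x0)) (dot n (G x0) (nu x0)) >= 0).

Definition visc_solution (n : nat) (Om : pt -> Prop) (lam : R) (nu : pt -> pt) (u : pt -> R) : Prop :=
  (forall x, clos_in_Rn n Om x -> cont_at n (clos_in_Rn n Om) u x) /\
  visc_sub n Om lam nu u /\ visc_super n Om lam nu u.

(* Let M and m be the maximum and the minimum of u on the closure. A supersolution
   lies above every cone a - k |x - c| with slope k > lam max(0, -m) whose vertex c
   sits where u > a: otherwise the C^2 profiles a - k sqrt(|x - c|^2 + eta^2) +
   eps |x - c|^2, which are decreasing, radially convex and steeper than lam |u|,
   would touch u from below at a point where the operator is negative; at boundary
   points the Neumann condition fails as well since, by convexity, the gradient of
   the profile points into the domain. A cone with vertex near a maximum point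
   gives M - m <= lam max(0, -m) diam. As -u is a supersolution of the same problem,
   also M - m <= lam max(0, M) diam, so u nonconstant forces M > 0 > m, and
   M - m >= 2 min(M, -m) yields lam diam >= 2. *)

From Stdlib Require Import Reals Lra Lia Classical ClassicalEpsilon FunctionalExtensionality.
From Coquelicot Require Import Coquelicot.
Open Scope R_scope.

Lemma rsum_ext n f g : (forall i, (i < n)%nat -> f i = g i) -> rsum n f = rsum n g.
Proof.
  induction n as [|n IH]; intros Hfg; simpl; [reflexivity|].
  rewrite IH, Hfg; auto; intros; apply Hfg; lia.
Qed.

Lemma rsum_plus n f g : rsum n (fun i => f i + g i) = rsum n f + rsum n g.
Proof. induction n as [|n IH]; simpl; [ring|rewrite IH; ring]. Qed.

Lemma rsum_minus n f g : rsum n (fun i => f i - g i) = rsum n f - rsum n g.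
Proof. induction n as [|n IH]; simpl; [ring|rewrite IH; ring]. Qed.

Lemma rsum_opp n f : rsum n (fun i => - f i) = - rsum n f.
Proof. induction n as [|n IH]; simpl; [ring|rewrite IH; ring]. Qed.

Lemma rsum_scal n c f : rsum n (fun i => c * f i) = c * rsum n f.
Proof. induction n as [|n IH]; simpl; [ring|rewrite IH; ring]. Qed.

Lemma rsum_const n c : rsum n (fun _ => c) = INR n * c.
Proof. induction n as [|n IH]; simpl rsum; [simpl; ring|rewrite IH, S_INR; ring]. Qed.

Lemma rsum_zero n f : (forall i, (i < n)%nat -> f i = 0) -> rsum n f = 0.
Proof. intros Hf. rewrite (rsum_ext n f (fun _ => 0)), rsum_const; [ring|exact Hf]. Qed.

Lemma rsum_nonneg n f : (forall i, (i < n)%nat -> 0 <= f i) -> 0 <= rsum n f.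
Proof.
  induction n as [|n IH]; intros Hf; simpl; [lra|].
  assert (0 <= f n) by (apply Hf; lia).
  assert (0 <= rsum n f) by (apply IH; intros; apply Hf; lia).
  lra.
Qed.

Lemma rsum_le n f g : (forall i, (i < n)%nat -> f i <= g i) -> rsum n f <= rsum n g.
Proof.
  intros Hfg. assert (0 <= rsum n (fun i => g i - f i)) as Hd.
  { apply rsum_nonneg; intros i Hi; specialize (Hfg i Hi); lra. }
  rewrite rsum_minus in Hd; lra.
Qed.

Lemma rsum_elem_le n f i :
  (forall j, (j < n)%nat -> 0 <= f j) -> (i < n)%nat -> f i <= rsum n f.
Proof.
  induction n as [|n IH]; intros Hf Hi; [lia|]. simpl.
  assert (0 <= f n) by (apply Hf; lia).
  destruct (Nat.eq_dec i n) as [->|Hne].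
  - assert (0 <= rsum n f) by (apply rsum_nonneg; intros; apply Hf; lia). lra.
  - assert (f i <= rsum n f) by (apply IH; [intros; apply Hf|]; lia). lra.
Qed.

Lemma rsum_delta n f i :
  (i < n)%nat -> rsum n (fun j => if Nat.eqb i j then f j else 0) = f i.
Proof.
  induction n as [|n IH]; intros Hi; [lia|]. simpl.
  destruct (Nat.eqb_spec i n) as [->|Hne].
  - rewrite rsum_zero; [ring|]. intros j Hj. destruct (Nat.eqb_spec n j); [lia|auto].
  - rewrite IH; [ring|lia].
Qed.

Lemma dot_self_nonneg n x : 0 <= dot n x x.
Proof. apply rsum_nonneg; intros; apply Rle_0_sqr. Qed.

Lemma nrm_nonneg n x : 0 <= nrm n x.
Proof. apply sqrt_pos. Qed.

Lemma distn_nonneg n x y : 0 <= distn n x y.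
Proof. apply nrm_nonneg. Qed.

Lemma nrm_sq n x : nrm n x * nrm n x = dot n x x.
Proof. apply sqrt_sqrt, dot_self_nonneg. Qed.

Lemma dot_scal_l n c x y : dot n (fun i => c * x i) y = c * dot n x y.
Proof. unfold dot; rewrite <- rsum_scal; apply rsum_ext; intros; ring. Qed.

Lemma dot_scal_r n c x y : dot n x (fun i => c * y i) = c * dot n x y.
Proof. unfold dot; rewrite <- rsum_scal; apply rsum_ext; intros; ring. Qed.

Lemma dot_opp_l n x y : dot n (fun i => - x i) y = - dot n x y.
Proof. unfold dot; rewrite <- rsum_opp; apply rsum_ext; intros; ring. Qed.

Lemma dot_lincomb_self n p q x y :
  dot n (fun i => p * x i - q * y i) (fun i => p * x i - q * y i)
  = p * p * dot n x x - 2 * p * q * dot n x y + q * q * dot n y y.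
Proof.
  unfold dot. rewrite <- !rsum_scal, <- rsum_minus, <- rsum_plus.
  apply rsum_ext; intros; ring.
Qed.

Lemma coord_le_nrm n x i : (i < n)%nat -> Rabs (x i) <= nrm n x.
Proof.
  intros Hi. apply Rsqr_incr_0_var; [|apply nrm_nonneg].
  rewrite <- Rsqr_abs. unfold Rsqr. rewrite nrm_sq.
  apply (rsum_elem_le n (fun i => x i * x i)); auto; intros; apply Rle_0_sqr.
Qed.

Lemma nrm_zero_coord n x : nrm n x = 0 -> forall i, (i < n)%nat -> x i = 0.
Proof.
  intros H0 i Hi. pose proof (coord_le_nrm n x i Hi) as Hle. rewrite H0 in Hle.
  destruct (Req_dec (x i) 0) as [|Hne]; [assumption|].
  pose proof (Rabs_pos_lt (x i) Hne); lra.
Qed.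

Lemma cauchy_schwarz n x y : dot n x y <= nrm n x * nrm n y.
Proof.
  set (a := nrm n x); set (b := nrm n y).
  assert (Ha : 0 <= a) by apply nrm_nonneg. assert (Hb : 0 <= b) by apply nrm_nonneg.
  destruct (Req_dec a 0) as [Ha0|Ha0].
  { unfold dot; rewrite rsum_zero; [nra|].
    intros i Hi; rewrite (nrm_zero_coord n x Ha0 i Hi); ring. }
  destruct (Req_dec b 0) as [Hb0|Hb0].
  { unfold dot; rewrite rsum_zero; [nra|].
    intros i Hi; rewrite (nrm_zero_coord n y Hb0 i Hi); ring. }
  (* 0 <= |b x - a y|^2 = 2 a b (a b - x.y) *)
  pose proof (dot_self_nonneg n (fun i => b * x i - a * y i)) as Hsq.
  rewrite dot_lincomb_self, <- (nrm_sq n x), <- (nrm_sq n y) in Hsq. fold a b in Hsq.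
  assert (Hab : 0 < a * b) by (apply Rmult_lt_0_compat; lra).
  apply Rmult_le_reg_l with (2 * (a * b)); nra.
Qed.

Lemma abs_dot_le n x y : Rabs (dot n x y) <= nrm n x * nrm n y.
Proof.
  assert (Hopp : nrm n (fun i => - x i) = nrm n x).
  { unfold nrm, dot; f_equal; apply rsum_ext; intros; ring. }
  pose proof (cauchy_schwarz n (fun i => - x i) y) as Hneg.
  rewrite dot_opp_l, Hopp in Hneg.
  apply Rabs_le; pose proof (cauchy_schwarz n x y); lra.
Qed.

Lemma nrm_triang n x y : nrm n (fun i => x i + y i) <= nrm n x + nrm n y.
Proof.
  pose proof (nrm_nonneg n x); pose proof (nrm_nonneg n y).
  apply Rsqr_incr_0_var; [|lra]. unfold Rsqr. rewrite nrm_sq.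
  replace (dot n (fun i => x i + y i) (fun i => x i + y i))
    with (dot n x x + 2 * dot n x y + dot n y y)
    by (unfold dot; rewrite <- rsum_scal, <- !rsum_plus; apply rsum_ext; intros; ring).
  rewrite <- (nrm_sq n x), <- (nrm_sq n y). pose proof (cauchy_schwarz n x y). nra.
Qed.

Lemma nrm_scal n c x : nrm n (fun i => c * x i) = Rabs c * nrm n x.
Proof.
  unfold nrm. rewrite dot_scal_l, dot_scal_r, <- Rmult_assoc.
  rewrite sqrt_mult_alt by nra. f_equal. rewrite <- sqrt_Rsqr_abs. reflexivity.
Qed.

Lemma nrm_small_coords n v e :
  0 < e -> (forall i, (i < n)%nat -> Rabs (v i) < e / (INR n + 1)) -> nrm n v < e.
Proof.
  intros He Hv. pose proof (pos_INR n). set (e' := e / (INR n + 1)).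
  assert (He' : 0 < e') by (apply Rdiv_lt_0_compat; lra).
  assert (Hdot : dot n v v <= INR n * (e' * e')).
  { unfold dot. rewrite <- rsum_const. apply rsum_le. intros i Hi. specialize (Hv i Hi). fold e' in Hv.
    replace (v i * v i) with (Rabs (v i) * Rabs (v i))
      by (rewrite <- Rabs_mult, Rabs_pos_eq; [ring|apply Rle_0_sqr]).
    pose proof (Rabs_pos (v i)). apply Rmult_le_compat; lra. }
  assert (Hlt : INR n * (e' * e') < e * e).
  { unfold e'. apply Rmult_lt_reg_r with ((INR n + 1) * (INR n + 1)); [nra|].
    replace (INR n * (e / (INR n + 1) * (e / (INR n + 1))) * ((INR n + 1) * (INR n + 1)))
      with (INR n * (e * e)) by (field; lra).
    assert (0 < e * e) by nra. assert (INR n < (INR n + 1) * (INR n + 1)) by nra.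
    nra. }
  rewrite <- (sqrt_Rsqr e) by lra. apply sqrt_lt_1_alt.
  split; [apply dot_self_nonneg|unfold Rsqr; lra].
Qed.

Lemma distn_sym n x y : distn n x y = distn n y x.
Proof. unfold distn, nrm, dot, vsub; f_equal; apply rsum_ext; intros; ring. Qed.

Lemma distn_self n x : distn n x x = 0.
Proof.
  unfold distn, nrm, dot. rewrite rsum_zero; [apply sqrt_0|]. intros; unfold vsub; ring.
Qed.

Lemma distn_triang n x y z : distn n x z <= distn n x y + distn n y z.
Proof.
  unfold distn.
  replace (vsub x z) with (fun i => vsub x y i + vsub y z i)
    by (apply functional_extensionality; intros; unfold vsub; ring).
  apply nrm_triang.
Qed.

Lemma nrm_le_distn n x y : nrm n x <= distn n x y + nrm n y.
Proof.
  unfold distn. replace x with (fun i => vsub x y i + y i) at 1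
    by (apply functional_extensionality; intros; unfold vsub; ring).
  apply nrm_triang.
Qed.

Lemma le_of_le_plus_small x y e0 : 0 < e0 -> (forall e, 0 < e < e0 -> x <= y + e) -> x <= y.
Proof.
  intros He0 Hsmall. apply Rle_plus_epsilon. intros e He.
  destruct (Rlt_le_dec e e0) as [Hlt|Hge].
  - apply Hsmall; lra.
  - pose proof (Hsmall (e0 / 2) ltac:(lra)). lra.
Qed.

Lemma le_mult_of_forall_gt b c d : 0 <= d -> (forall k, b < k -> c <= k * d) -> c <= b * d.
Proof.
  intros Hd Hc. apply Rle_plus_epsilon. intros e He.
  apply Rle_trans with ((b + e / (d + 1)) * d).
  - apply Hc. assert (0 < e / (d + 1)) by (apply Rdiv_lt_0_compat; lra). lra.
  - assert (e / (d + 1) * d <= e).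
    { apply Rmult_le_reg_r with (d + 1); [lra|].
      replace (e / (d + 1) * d * (d + 1)) with (e * d) by (field; lra). nra. }
    lra.
Qed.

Lemma le_sqrt_of_sq_le r s : 0 <= r -> r * r <= s -> r <= sqrt s.
Proof. intros Hr Hrs. rewrite <- (sqrt_square r) by lra. apply sqrt_le_1_alt; lra. Qed.

Lemma sqrt_lt_of_lt_sq s r : 0 <= s -> 0 < r -> s < r * r -> sqrt s < r.
Proof. intros Hs Hr Hsr. rewrite <- (sqrt_square r) by lra. apply sqrt_lt_1_alt; lra. Qed.

Lemma sqrt_plus_sq_le s e : 0 <= s -> 0 <= e -> sqrt (s + e * e) <= sqrt s + e.
Proof.
  intros Hs He. pose proof (sqrt_pos s).
  apply Rsqr_incr_0_var; [|lra]. unfold Rsqr.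
  rewrite sqrt_sqrt by nra.
  replace ((sqrt s + e) * (sqrt s + e)) with (sqrt s * sqrt s + 2 * sqrt s * e + e * e) by ring.
  rewrite sqrt_sqrt by lra. nra.
Qed.

(** * Frechet derivatives *)

Lemma frechet_ext_grad n f x g g' :
  (forall i, (i < n)%nat -> g i = g' i) -> frechet n f x g -> frechet n f x g'.
Proof.
  intros Hg Hf eps Heps. destruct (Hf eps Heps) as [d [Hd Hy]]. exists d; split; auto.
  intros y Hy1 Hy2. replace (dot n g' (vsub y x)) with (dot n g (vsub y x)); auto.
  unfold dot; apply rsum_ext; intros; rewrite Hg; auto.
Qed.

Lemma frechet_lip n f x g : frechet n f x g -> exists d, 0 < d /\
  forall y, inRn n y -> distn n y x < d -> Rabs (f y - f x) <= (nrm n g + 1) * distn n y x.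
Proof.
  intros Hf. destruct (Hf 1 Rlt_0_1) as [d [Hd Hy]]. exists d; split; auto.
  intros y Hy1 Hy2. specialize (Hy y Hy1 Hy2). pose proof (abs_dot_le n g (vsub y x)).
  replace (f y - f x) with ((f y - f x - dot n g (vsub y x)) + dot n g (vsub y x)) by ring.
  eapply Rle_trans; [apply Rabs_triang|]. unfold distn in *. lra.
Qed.

Lemma frechet_cont n f x g : frechet n f x g -> cont_at n (inRn n) f x.
Proof.
  intros Hf eps Heps. destruct (frechet_lip n f x g Hf) as [d [Hd Hy]].
  set (C := nrm n g + 1). assert (HC : 1 <= C) by (pose proof (nrm_nonneg n g); unfold C; lra).
  exists (Rmin d (eps / C)). split; [apply Rmin_pos; [lra|apply Rdiv_lt_0_compat; lra]|].
  intros y Hy1 Hy2. apply Rmin_Rgt_l in Hy2 as [Hyd Hye].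
  eapply Rle_lt_trans; [apply Hy; auto|]. fold C.
  apply Rmult_lt_compat_l with (r := C) in Hye; [|lra].
  replace (C * (eps / C)) with eps in Hye by (field; lra). lra.
Qed.

Lemma frechet_const n a x : frechet n (fun _ => a) x (fun _ => 0).
Proof.
  intros eps Heps. exists 1; split; [lra|]. intros y _ _.
  replace (dot n (fun _ => 0) (vsub y x)) with 0
    by (unfold dot; rewrite rsum_zero; auto; intros; ring).
  rewrite Rminus_0_r, Rminus_diag, Rabs_R0.
  apply Rmult_le_pos; [lra|apply distn_nonneg].
Qed.

Lemma frechet_coord n i x :
  (i < n)%nat -> frechet n (fun y => y i) x (fun j => if Nat.eqb i j then 1 else 0).
Proof.
  intros Hi eps Heps. exists 1; split; [lra|]. intros y _ _.
  replace (dot n (fun j => if Nat.eqb i j then 1 else 0) (vsub y x)) with (y i - x i).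
  - replace (y i - x i - (y i - x i)) with 0 by ring. rewrite Rabs_R0.
    apply Rmult_le_pos; [lra|apply distn_nonneg].
  - unfold dot. change (y i - x i) with (vsub y x i). rewrite <- (rsum_delta n (vsub y x) i Hi).
    apply rsum_ext; intros j _. destruct (Nat.eqb i j); unfold vsub; ring.
Qed.

Lemma frechet_plus n f1 f2 x g1 g2 : frechet n f1 x g1 -> frechet n f2 x g2 ->
  frechet n (fun y => f1 y + f2 y) x (fun i => g1 i + g2 i).
Proof.
  intros H1 H2 eps Heps.
  destruct (H1 (eps / 2)) as [d1 [Hd1 Hy1]]; [lra|].
  destruct (H2 (eps / 2)) as [d2 [Hd2 Hy2]]; [lra|].
  exists (Rmin d1 d2); split; [apply Rmin_pos; auto|].
  intros y Hy Hd. apply Rmin_Rgt_l in Hd as [Hyd1 Hyd2].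
  specialize (Hy1 y Hy Hyd1). specialize (Hy2 y Hy Hyd2).
  replace (dot n (fun i => g1 i + g2 i) (vsub y x))
    with (dot n g1 (vsub y x) + dot n g2 (vsub y x))
    by (unfold dot; rewrite <- rsum_plus; apply rsum_ext; intros; ring).
  replace (f1 y + f2 y - (f1 x + f2 x) - (dot n g1 (vsub y x) + dot n g2 (vsub y x)))
    with ((f1 y - f1 x - dot n g1 (vsub y x)) + (f2 y - f2 x - dot n g2 (vsub y x)))
    by ring.
  eapply Rle_trans; [apply Rabs_triang|]. lra.
Qed.

Lemma Rabs_mult_le_scaled u v e r : 0 <= e -> 0 <= r -> 0 <= v ->
  v <= e / (Rabs u + 1) * r -> Rabs u * v <= e * r.
Proof.
  intros He Hr Hv Huv. pose proof (Rabs_pos u).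
  apply Rle_trans with ((Rabs u + 1) * v); [nra|].
  apply Rle_trans with ((Rabs u + 1) * (e / (Rabs u + 1) * r)); [apply Rmult_le_compat_l; lra|].
  right; field; lra.
Qed.

Lemma frechet_scal n c f x g :
  frechet n f x g -> frechet n (fun y => c * f y) x (fun i => c * g i).
Proof.
  intros Hf eps Heps.
  destruct (Hf (eps / (Rabs c + 1))) as [d [Hd Hy]];
    [apply Rdiv_lt_0_compat; pose proof (Rabs_pos c); lra|].
  exists d; split; auto. intros y Hy1 Hy2. specialize (Hy y Hy1 Hy2).
  rewrite dot_scal_l.
  replace (c * f y - c * f x - c * dot n g (vsub y x))
    with (c * (f y - f x - dot n g (vsub y x))) by ring.
  rewrite Rabs_mult. apply Rabs_mult_le_scaled; auto using Rabs_pos, distn_nonneg; lra.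
Qed.

Lemma frechet_opp n f x g :
  frechet n f x g -> frechet n (fun y => - f y) x (fun i => - g i).
Proof.
  intros Hf eps Heps. destruct (Hf eps Heps) as [d [Hd Hy]]. exists d; split; auto.
  intros y Hy1 Hy2. rewrite dot_opp_l.
  replace (- f y - - f x - - dot n g (vsub y x)) with (- (f y - f x - dot n g (vsub y x)))
    by ring.
  rewrite Rabs_Ropp; auto.
Qed.

Lemma derivable_pt_lim_bound f t l : derivable_pt_lim f t l ->
  forall eps, 0 < eps -> exists d, 0 < d /\
    forall h, Rabs h < d -> Rabs (f (t + h) - f t - l * h) <= eps * Rabs h.
Proof.
  intros Hf eps Heps. destruct (Hf eps Heps) as [d Hd]. exists d; split; [apply cond_pos|].
  intros h Hh. destruct (Req_dec h 0) as [->|Hh0].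
  - rewrite Rplus_0_r. replace (f t - f t - l * 0) with 0 by ring. rewrite Rabs_R0; lra.
  - replace (f (t + h) - f t - l * h) with (((f (t + h) - f t) / h - l) * h) by (field; auto).
    rewrite Rabs_mult. apply Rmult_le_compat_r; [apply Rabs_pos|].
    specialize (Hd h Hh0 Hh); lra.
Qed.

Lemma frechet_comp n (Phi : R -> R) l f x g :
  frechet n f x g -> derivable_pt_lim Phi (f x) l ->
  frechet n (fun y => Phi (f y)) x (fun i => l * g i).
Proof.
  intros Hf HPhi eps Heps.
  set (C := nrm n g + 1). assert (HC : 1 <= C) by (pose proof (nrm_nonneg n g); unfold C; lra).
  destruct (frechet_lip n f x g Hf) as [d1 [Hd1 Hlip]].
  destruct (Hf (eps / 2 / (Rabs l + 1))) as [d2 [Hd2 Hf']];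
    [apply Rdiv_lt_0_compat; pose proof (Rabs_pos l); lra|].
  destruct (derivable_pt_lim_bound Phi (f x) l HPhi (eps / 2 / C)) as [d0 [Hd0 HPhi']];
    [apply Rdiv_lt_0_compat; lra|].
  exists (Rmin d1 (Rmin d2 (d0 / C))).
  split; [repeat apply Rmin_pos; try apply Rdiv_lt_0_compat; lra|].
  intros y Hy Hd. apply Rmin_Rgt_l in Hd as [Hyd1 Hd]. apply Rmin_Rgt_l in Hd as [Hyd2 Hyd0].
  specialize (Hlip y Hy Hyd1). specialize (Hf' y Hy Hyd2). fold C in Hlip.
  set (r := distn n y x) in *. assert (Hr : 0 <= r) by apply distn_nonneg.
  assert (Hh : Rabs (f y - f x) < d0).
  { apply Rmult_lt_compat_l with (r := C) in Hyd0; [|lra].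
    replace (C * (d0 / C)) with d0 in Hyd0 by (field; lra). lra. }
  specialize (HPhi' _ Hh). replace (f x + (f y - f x)) with (f y) in HPhi' by ring.
  rewrite dot_scal_l.
  replace (Phi (f y) - Phi (f x) - l * dot n g (vsub y x))
    with ((Phi (f y) - Phi (f x) - l * (f y - f x)) + l * (f y - f x - dot n g (vsub y x)))
    by ring.
  eapply Rle_trans; [apply Rabs_triang|]. rewrite Rabs_mult.
  assert (eps / 2 / C * Rabs (f y - f x) <= eps / 2 * r).
  { apply Rle_trans with (eps / 2 / C * (C * r)).
    - apply Rmult_le_compat_l; [apply Rlt_le, Rdiv_lt_0_compat|]; lra.
    - right; field; lra. }
  assert (Rabs l * Rabs (f y - f x - dot n g (vsub y x)) <= eps / 2 * r)
    by (apply Rabs_mult_le_scaled; auto using Rabs_pos; lra).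
  lra.
Qed.

Lemma frechet_mult n f l x g1 g2 : frechet n f x g1 -> frechet n l x g2 ->
  frechet n (fun y => f y * l y) x (fun i => f x * g2 i + l x * g1 i).
Proof.
  intros Hf Hl eps Heps.
  set (C1 := nrm n g1 + 1). assert (HC1 : 1 <= C1) by (pose proof (nrm_nonneg n g1); unfold C1; lra).
  set (C2 := nrm n g2 + 1). assert (HC2 : 1 <= C2) by (pose proof (nrm_nonneg n g2); unfold C2; lra).
  destruct (frechet_lip n f x g1 Hf) as [da [Hda Hlf]].
  destruct (frechet_lip n l x g2 Hl) as [db [Hdb Hll]].
  destruct (Hf (eps / 3 / (Rabs (l x) + 1))) as [d1 [Hd1 Hf']];
    [apply Rdiv_lt_0_compat; pose proof (Rabs_pos (l x)); lra|].
  destruct (Hl (eps / 3 / (Rabs (f x) + 1))) as [d2 [Hd2 Hl']];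
    [apply Rdiv_lt_0_compat; pose proof (Rabs_pos (f x)); lra|].
  set (d3 := eps / 3 / (C1 * C2)). assert (Hd3 : 0 < d3) by (apply Rdiv_lt_0_compat; nra).
  exists (Rmin (Rmin (Rmin da db) (Rmin d1 d2)) d3). split; [repeat apply Rmin_pos; auto|].
  intros y Hy Hd. apply Rmin_Rgt_l in Hd as [Hd Hyd3]. apply Rmin_Rgt_l in Hd as [Hd Hd'].
  apply Rmin_Rgt_l in Hd as [Hyda Hydb]. apply Rmin_Rgt_l in Hd' as [Hyd1 Hyd2].
  specialize (Hlf y Hy Hyda). specialize (Hll y Hy Hydb).
  specialize (Hf' y Hy Hyd1). specialize (Hl' y Hy Hyd2). fold C1 in Hlf. fold C2 in Hll.
  set (r := distn n y x) in *. assert (Hr : 0 <= r) by apply distn_nonneg.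
  replace (dot n (fun i => f x * g2 i + l x * g1 i) (vsub y x))
    with (f x * dot n g2 (vsub y x) + l x * dot n g1 (vsub y x))
    by (unfold dot; rewrite <- !rsum_scal, <- rsum_plus; apply rsum_ext; intros; ring).
  replace (f y * l y - f x * l x - (f x * dot n g2 (vsub y x) + l x * dot n g1 (vsub y x)))
    with (f x * (l y - l x - dot n g2 (vsub y x)) + l x * (f y - f x - dot n g1 (vsub y x))
          + (f y - f x) * (l y - l x)) by ring.
  eapply Rle_trans; [apply Rabs_triang|].
  eapply Rle_trans; [apply Rplus_le_compat_r, Rabs_triang|]. rewrite !Rabs_mult.
  assert (Rabs (f x) * Rabs (l y - l x - dot n g2 (vsub y x)) <= eps / 3 * r)
    by (apply Rabs_mult_le_scaled; auto using Rabs_pos; lra).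
  assert (Rabs (l x) * Rabs (f y - f x - dot n g1 (vsub y x)) <= eps / 3 * r)
    by (apply Rabs_mult_le_scaled; auto using Rabs_pos; lra).
  assert (Rabs (f y - f x) * Rabs (l y - l x) <= eps / 3 * r).
  { assert (C1 * C2 * r <= eps / 3).
    { replace (eps / 3) with (C1 * C2 * d3) by (unfold d3; field; lra).
      apply Rmult_le_compat_l; nra. }
    apply Rle_trans with (C1 * r * (C2 * r)); [apply Rmult_le_compat; auto using Rabs_pos|].
    nra. }
  lra.
Qed.

Lemma cont_opp n V f x : cont_at n V f x -> cont_at n V (fun y => - f y) x.
Proof.
  intros Hf eps Heps. destruct (Hf eps Heps) as [d [Hd Hy]]. exists d; split; auto.
  intros y Hy1 Hy2. replace (- f y - - f x) with (- (f y - f x)) by ring.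
  rewrite Rabs_Ropp; auto.
Qed.

Lemma cont_minus n V f g x :
  cont_at n V f x -> cont_at n V g x -> cont_at n V (fun y => f y - g y) x.
Proof.
  intros Hf Hg eps Heps.
  destruct (Hf (eps / 2)) as [d1 [Hd1 Hy1]]; [lra|].
  destruct (Hg (eps / 2)) as [d2 [Hd2 Hy2]]; [lra|].
  exists (Rmin d1 d2). split; [apply Rmin_pos; auto|].
  intros y Hy Hd. apply Rmin_Rgt_l in Hd as [Hyd1 Hyd2].
  specialize (Hy1 y Hy Hyd1). specialize (Hy2 y Hy Hyd2).
  replace (f y - g y - (f x - g x)) with ((f y - f x) - (g y - g x)) by ring.
  eapply Rle_lt_trans; [apply Rabs_triang|]. rewrite Rabs_Ropp. lra.
Qed.

Lemma cont_at_subset n V W f x :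
  (forall y, V y -> W y) -> cont_at n W f x -> cont_at n V f x.
Proof.
  intros HVW Hf eps Heps. destruct (Hf eps Heps) as [d [Hd Hy]]. exists d; split; auto.
Qed.

(** * Compactness of the closure *)

Lemma nat_gt r N : exists k, (N <= k)%nat /\ r < INR k.
Proof.
  destruct (INR_unbounded r) as [m Hm]. exists (Nat.max N m). split; [lia|].
  apply Rlt_le_trans with (INR m); [lra|apply le_INR; lia].
Qed.

Lemma nat_inv_small e N : 0 < e -> exists k, (N <= k)%nat /\ / (INR k + 1) < e.
Proof.
  intros He. destruct (nat_gt (/ e) N) as [k [Hk1 Hk2]]. exists k; split; auto.
  pose proof (pos_INR k). rewrite <- (Rinv_inv e).
  apply Rinv_lt_contravar; [apply Rmult_lt_0_compat; [apply Rinv_0_lt_compat|]|]; lra.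
Qed.

Lemma strict_incr_ge (f : nat -> nat) : (forall k, (f k < f (S k))%nat) -> forall k, (k <= f k)%nat.
Proof. intros Hf k; induction k; [lia|]. specialize (Hf k); lia. Qed.

Lemma strict_incr_mono (f : nat -> nat) :
  (forall k, (f k < f (S k))%nat) -> forall a b, (a <= b)%nat -> (f a <= f b)%nat.
Proof. intros Hf a b Hab. induction Hab; auto. specialize (Hf m); lia. Qed.

Lemma Un_cv_subseq (a : nat -> R) l (psi : nat -> nat) :
  (forall k, (psi k < psi (S k))%nat) -> Un_cv a l -> Un_cv (fun k => a (psi k)) l.
Proof.
  intros Hpsi Ha eps Heps. destruct (Ha eps Heps) as [N HN]. exists N. intros k Hk.
  apply HN. pose proof (strict_incr_ge psi Hpsi k). lia.
Qed.

Lemma bounded_seq_cv_subseq (a : nat -> R) B : (forall k, Rabs (a k) <= B) ->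
  exists phi : nat -> nat, (forall k, (phi k < phi (S k))%nat) /\
    exists l, Un_cv (fun k => a (phi k)) l.
Proof.
  intros Hb.
  destruct (Bolzano_Weierstrass a (fun c => -B <= c <= B)) as [l Hl].
  { apply compact_P3. }
  { intros k; specialize (Hb k); pose proof (Rle_abs (a k)); pose proof (Rle_abs (- a k)); rewrite Rabs_Ropp in *; lra. }
  assert (Hnear : forall k N, exists p, (N <= p)%nat /\ Rabs (a p - l) < / (INR k + 1)).
  { intros k N. assert (Hp : 0 < / (INR k + 1)) by (apply Rinv_0_lt_compat; pose proof (pos_INR k); lra).
    destruct (Hl (disc l (mkposreal _ Hp)) N) as [p [Hp1 Hp2]];
      [exists (mkposreal _ Hp); intros y Hy; auto|].
    exists p; split; auto. }
  set (pick := fun k N => proj1_sig (constructive_indefinite_description _ (Hnear k N))).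
  assert (Hpick : forall k N, (N <= pick k N)%nat /\ Rabs (a (pick k N) - l) < / (INR k + 1)).
  { intros k N. unfold pick. destruct (constructive_indefinite_description _ (Hnear k N)); auto. }
  set (phi := fix phi k := match k with O => pick O O | S k' => pick (S k') (S (phi k')) end).
  exists phi. split.
  - intros k. simpl. destruct (Hpick (S k) (S (phi k))). lia.
  - exists l. intros eps Heps. destruct (nat_inv_small eps 0 Heps) as [N [_ HN]].
    exists N. intros k Hk. unfold R_dist.
    assert (Rabs (a (phi k) - l) < / (INR k + 1)) by (destruct k; apply Hpick).
    assert (/ (INR k + 1) <= / (INR N + 1)).
    { apply Rinv_le_contravar; [pose proof (pos_INR N); lra|].
      apply Rplus_le_compat_r, le_INR; lia. }
    lra.
Qed.

Lemma coords_cv_subseq (xs : nat -> pt) B : (forall k i, Rabs (xs k i) <= B) -> forall j,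
  exists phi : nat -> nat, (forall k, (phi k < phi (S k))%nat) /\
    exists L : pt, forall i, (i < j)%nat -> Un_cv (fun k => xs (phi k) i) (L i).
Proof.
  intros Hb j. induction j as [|j IH].
  - exists (fun k => k). split; [intros; lia|]. exists (fun _ => 0). intros; lia.
  - destruct IH as [phi [Hphi [L HL]]].
    destruct (bounded_seq_cv_subseq (fun k => xs (phi k) j) B) as [psi [Hpsi [l Hl]]];
      [intros; apply Hb|].
    exists (fun k => phi (psi k)). split.
    + intros k. apply Nat.lt_le_trans with (phi (S (psi k))); [apply Hphi|].
      apply strict_incr_mono; auto. apply Hpsi.
    + exists (fun i => if Nat.eqb i j then l else L i). intros i Hi.
      destruct (Nat.eqb_spec i j) as [->|Hne]; auto.
      apply (Un_cv_subseq (fun k => xs (phi k) i)); auto. apply HL; lia.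
Qed.

Lemma coords_cv_uniform (a : nat -> pt) (L : pt) j :
  (forall i, (i < j)%nat -> Un_cv (fun k => a k i) (L i)) ->
  forall e, 0 < e -> exists N, forall k, (N <= k)%nat ->
    forall i, (i < j)%nat -> Rabs (a k i - L i) < e.
Proof.
  induction j as [|j IH]; intros Ha e He.
  - exists O; intros; lia.
  - destruct (IH (fun i Hi => Ha i ltac:(lia)) e He) as [N1 HN1].
    destruct (Ha j ltac:(lia) e He) as [N2 HN2]. exists (Nat.max N1 N2).
    intros k Hk i Hi. destruct (Nat.eq_dec i j) as [->|Hne].
    + apply HN2; lia.
    + apply HN1; lia.
Qed.

Section Closure.
Variables (n : nat) (Om : pt -> Prop) (B : R).
Hypothesis HB : forall x, Om x -> nrm n x <= B.

Lemma closure_coord_bound x : clos_in_Rn n Om x -> forall i, Rabs (x i) <= B + 1.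
Proof.
  intros [Hx Hc] i. destruct (Hc 1 Rlt_0_1) as [y [Hy Hd]].
  pose proof (HB y Hy). pose proof (nrm_le_distn n x y). rewrite distn_sym in Hd.
  destruct (Nat.lt_ge_cases i n) as [Hi|Hi].
  - pose proof (coord_le_nrm n x i Hi). lra.
  - rewrite (Hx i Hi), Rabs_R0. pose proof (nrm_nonneg n x). lra.
Qed.

Lemma closure_seq_compact (xs : nat -> pt) : (forall k, clos_in_Rn n Om (xs k)) ->
  exists (phi : nat -> nat) x, clos_in_Rn n Om x /\ (forall k, (k <= phi k)%nat) /\
    forall e, 0 < e -> exists N, forall k, (N <= k)%nat -> distn n (xs (phi k)) x < e.
Proof.
  intros Hxs.
  destruct (coords_cv_subseq xs (B + 1) (fun k => closure_coord_bound _ (Hxs k)) n)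
    as [phi [Hphi [L HL]]].
  set (x := fun i => if Nat.ltb i n then L i else 0).
  assert (Hcv : forall e, 0 < e -> exists N, forall k, (N <= k)%nat -> distn n (xs (phi k)) x < e).
  { intros e He. pose proof (pos_INR n).
    destruct (coords_cv_uniform (fun k => xs (phi k)) L n HL (e / (INR n + 1)))
      as [N HN]; [apply Rdiv_lt_0_compat; lra|].
    exists N. intros k Hk. apply nrm_small_coords; auto. intros i Hi. unfold vsub, x.
    destruct (Nat.ltb_spec i n); [apply HN; auto|lia]. }
  exists phi, x. split; [|split; [apply strict_incr_ge; auto|exact Hcv]].
  split.
  - intros i Hi. unfold x. destruct (Nat.ltb_spec i n); auto; lia.
  - intros e He. destruct (Hcv (e / 2)) as [N HN]; [lra|].
    destruct (proj2 (Hxs (phi N)) (e / 2)) as [y [Hy Hd]]; [lra|].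
    exists y. split; auto. pose proof (distn_triang n y (xs (phi N)) x).
    specialize (HN N (le_n N)). lra.
Qed.

Lemma closure_cont_bounded_below (f : pt -> R) :
  (forall x, clos_in_Rn n Om x -> cont_at n (clos_in_Rn n Om) f x) ->
  exists m, forall x, clos_in_Rn n Om x -> m <= f x.
Proof.
  intros Hf. apply NNPP. intros Hunb.
  assert (Hs : forall k : nat, exists x, clos_in_Rn n Om x /\ f x < - INR k).
  { intros k. apply NNPP. intros Hk. apply Hunb. exists (- INR k). intros x Kx.
    apply Rnot_lt_le. intros Hlt. apply Hk. exists x; auto. }
  destruct (choice _ Hs) as [xs Hxs].
  destruct (closure_seq_compact xs (fun k => proj1 (Hxs k))) as [phi [x [Kx [Hphi Hcv]]]].
  destruct (Hf x Kx 1 Rlt_0_1) as [d [Hd Hcd]]. destruct (Hcv d Hd) as [N HN].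
  destruct (nat_gt (- f x + 1) N) as [k [Hk1 Hk2]].
  specialize (Hcd (xs (phi k)) (proj1 (Hxs (phi k))) (HN k Hk1)).
  pose proof (proj2 (Hxs (phi k))). pose proof (le_INR _ _ (Hphi k)).
  apply Rabs_def2 in Hcd. lra.
Qed.

Lemma closure_cont_attains_min (f : pt -> R) : (exists x, clos_in_Rn n Om x) ->
  (forall x, clos_in_Rn n Om x -> cont_at n (clos_in_Rn n Om) f x) ->
  exists x0, clos_in_Rn n Om x0 /\ forall x, clos_in_Rn n Om x -> f x0 <= f x.
Proof.
  intros [z Hz] Hf. destruct (closure_cont_bounded_below f Hf) as [m Hm].
  destruct (completeness (fun r => exists x, clos_in_Rn n Om x /\ r = - f x)) as [s [Hs1 Hs2]].
  { exists (- m). intros r [x [Kx ->]]. specialize (Hm x Kx). lra. }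
  { exists (- f z), z; auto. }
  assert (Hge : forall x, clos_in_Rn n Om x -> - s <= f x).
  { intros x Kx. assert (- f x <= s) by (apply Hs1; exists x; auto). lra. }
  assert (Happ : forall k : nat, exists x, clos_in_Rn n Om x /\ f x < - s + / (INR k + 1)).
  { intros k. apply NNPP. intros Hno.
    assert (s <= s - / (INR k + 1)); [|pose proof (pos_INR k);
      assert (0 < / (INR k + 1)) by (apply Rinv_0_lt_compat; lra); lra].
    apply Hs2. intros r [x [Kx ->]]. apply Rnot_lt_le. intros Hlt. apply Hno.
    exists x; split; auto; lra. }
  destruct (choice _ Happ) as [xs Hxs].
  destruct (closure_seq_compact xs (fun k => proj1 (Hxs k))) as [phi [x [Kx [Hphi Hcv]]]].
  exists x; split; auto. intros y Ky. apply Rle_trans with (- s); auto.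
  apply Rnot_lt_le; intros Hlt. set (e := f x - - s).
  destruct (Hf x Kx (e / 2)) as [d [Hd Hcd]]; [unfold e; lra|].
  destruct (Hcv d Hd) as [N1 HN1].
  destruct (nat_inv_small (e / 2) N1) as [k [Hk1 Hk2]]; [unfold e; lra|].
  specialize (Hcd (xs (phi k)) (proj1 (Hxs (phi k))) (HN1 k Hk1)).
  pose proof (proj2 (Hxs (phi k))).
  assert (/ (INR (phi k) + 1) <= / (INR k + 1)).
  { apply Rinv_le_contravar; [pose proof (pos_INR k); lra|].
    apply Rplus_le_compat_r, le_INR, Hphi. }
  apply Rabs_def2 in Hcd. unfold e in *. lra.
Qed.

End Closure.

(** * Convex domains with a smooth defining function *)

Lemma closure_distn_le_lub n Om diam :
  is_lub (fun r => exists x y, Om x /\ Om y /\ r = distn n x y) diam ->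
  forall x y, clos_in_Rn n Om x -> clos_in_Rn n Om y -> distn n x y <= diam.
Proof.
  intros [Hub _] x y [_ Hx] [_ Hy]. apply Rnot_lt_le; intros Hlt.
  set (e := (distn n x y - diam) / 3). assert (He : 0 < e) by (unfold e; lra).
  destruct (Hx e He) as [x' [Hx' Hdx]]. destruct (Hy e He) as [y' [Hy' Hdy]].
  assert (distn n x' y' <= diam) by (apply Hub; exists x', y'; auto).
  pose proof (distn_triang n x x' y). pose proof (distn_triang n x' y' y).
  rewrite distn_sym in Hdx. unfold e in *; lra.
Qed.

Section ConvexDomain.
Variables (n : nat) (Om : pt -> Prop).
Hypothesis Hopen : open_in_Rn n Om.
Hypothesis Hconv : convex_in_Rn n Om.

Lemma closure_of_mem x : Om x -> clos_in_Rn n Om x.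
Proof.
  intros Hx. split; [apply (proj1 Hopen x Hx)|].
  intros e He. exists x; split; auto. rewrite distn_self; auto.
Qed.

Lemma segment_closure_interior x0 z r t : clos_in_Rn n Om x0 -> inRn n z -> 0 < r ->
  (forall y, inRn n y -> distn n y z < r -> Om y) -> 0 < t <= 1 ->
  Om (fun i => (1 - t) * x0 i + t * z i).
Proof.
  intros [Hx0 Hc] Hz Hr Hball Ht.
  destruct (Hc (t * r)) as [x' [Hx' Hd]]; [apply Rmult_lt_0_compat; lra|].
  assert (Hx'n : inRn n x') by (apply (proj1 Hopen); auto).
  (* [x'] in [Om] is close to [x0], and [z'] close to [z] is chosen so that the segment
     from [x'] to [z'] passes through the target point *)
  set (z' := fun i => z i + (1 - t) / t * (x0 i - x' i)).
  assert (Hst : 0 <= (1 - t) / t) by (apply Rmult_le_pos; [|apply Rlt_le, Rinv_0_lt_compat]; lra).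
  assert (Hz' : Om z').
  { apply Hball.
    - intros i Hi. unfold z'. rewrite Hz, Hx0, Hx'n by auto. ring.
    - unfold distn. replace (vsub z' z) with (fun i => (1 - t) / t * vsub x0 x' i)
        by (apply functional_extensionality; intros; unfold z', vsub; ring).
      rewrite nrm_scal, Rabs_pos_eq by exact Hst. fold (distn n x0 x'). rewrite distn_sym.
      apply Rle_lt_trans with ((1 - t) / t * (t * r)); [apply Rmult_le_compat_l; lra|].
      replace ((1 - t) / t * (t * r)) with ((1 - t) * r) by (field; lra). nra. }
  replace (fun i => (1 - t) * x0 i + t * z i) with (fun i => (1 - t) * x' i + t * z' i)
    by (apply functional_extensionality; intros i; unfold z'; field; lra).
  apply Hconv; auto; lra.
Qed.

Variables (rho : pt -> R) (D : list nat -> pt -> R).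
Hypothesis Hdef : defining_fn n Om rho D.

Lemma grad_defining_toward_interior x0 z :
  bdry_in_Rn n Om x0 -> Om z -> dot n (fun i => D (i :: nil) x0) (vsub z x0) <= 0.
Proof.
  destruct Hdef as [[HD0 HD1] [Hrho _]]. intros [Hx0K Hx0n] Hz.
  destruct (proj2 Hopen z Hz) as [r [Hr Hball]].
  set (gr := fun i => D (i :: nil) x0). set (w := vsub z x0). set (W := nrm n w + 1).
  assert (HW : 1 <= W) by (pose proof (nrm_nonneg n w); unfold W; lra).
  apply Rnot_lt_le; intros Ha. set (a := dot n gr w) in *.
  destruct (HD1 nil x0 (proj1 Hx0K) (a / (2 * W))) as [d [Hd Hfr]];
    [apply Rdiv_lt_0_compat; lra|].
  set (t := Rmin 1 (d / W)).
  assert (Ht : 0 < t <= 1) by (split; [apply Rmin_pos; [|apply Rdiv_lt_0_compat]; lra|apply Rmin_l]).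
  assert (Htd : t * W <= d).
  { apply Rle_trans with (d / W * W); [apply Rmult_le_compat_r; [lra|apply Rmin_r]|].
    right; field; lra. }
  set (p := fun i => (1 - t) * x0 i + t * z i).
  assert (Hp : Om p) by (apply (segment_closure_interior x0 z r t); auto; apply (proj1 Hopen); auto).
  assert (Hvp : vsub p x0 = fun i => t * w i)
    by (apply functional_extensionality; intros; unfold vsub, p, w, vsub; ring).
  assert (Hdp : distn n p x0 = t * nrm n w)
    by (unfold distn; rewrite Hvp, nrm_scal, Rabs_pos_eq; lra).
  specialize (Hfr p (proj1 Hopen p Hp) ltac:(rewrite Hdp; unfold W in Htd; nra)).
  rewrite Hvp, dot_scal_r, Hdp, !HD0 in Hfr. fold gr a in Hfr.
  assert (rho p < 0) by (apply Hrho; auto; apply (proj1 Hopen); auto).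
  assert (0 <= rho x0) by (apply Rnot_lt_le; intros Hl; apply Hx0n, Hrho; auto; apply Hx0K).
  assert (a / (2 * W) * (t * nrm n w) <= t * a / 2).
  { apply Rle_trans with (a / (2 * W) * (t * W)).
    - apply Rmult_le_compat_l; [apply Rlt_le, Rdiv_lt_0_compat; lra|]. unfold W; nra.
    - right; field; lra. }
  pose proof (Rle_abs (- (rho p - rho x0 - t * a))). rewrite Rabs_Ropp in *. nra.
Qed.

Lemma grad_defining_nrm_pos x0 : bdry_in_Rn n Om x0 -> 0 < nrm n (fun i => D (i :: nil) x0).
Proof.
  intros Hx0. destruct (nrm_nonneg n (fun i => D (i :: nil) x0)) as [|HN0]; auto.
  destruct Hdef as [_ [_ Hgr]]. exfalso; apply (Hgr x0 Hx0); auto.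
Qed.

Lemma grad_defining_outward x0 c :
  bdry_in_Rn n Om x0 -> Om c -> 0 < dot n (vsub x0 c) (fun i => D (i :: nil) x0).
Proof.
  intros Hx0 Hc. set (gr := fun i => D (i :: nil) x0). set (N := nrm n gr).
  assert (HN : 0 < N) by (apply grad_defining_nrm_pos; auto).
  destruct (proj2 Hopen c Hc) as [r [Hr Hball]].
  (* the unit vector along the gradient, cut off beyond the first [n] coordinates so
     that [z] below is a point of R^n *)
  set (e := fun i => if Nat.ltb i n then gr i / N else 0).
  assert (Hge : dot n gr e = N).
  { unfold dot, e. transitivity (rsum n (fun i => / N * (gr i * gr i))).
    - apply rsum_ext; intros i Hi; destruct (Nat.ltb_spec i n); [field; lra|lia].
    - rewrite rsum_scal. fold (dot n gr gr). rewrite <- (nrm_sq n gr). fold N. field; lra. }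
  assert (Hee : nrm n e = 1).
  { unfold nrm. replace (dot n e e) with 1; [apply sqrt_1|].
    unfold dot, e. transitivity (rsum n (fun i => / (N * N) * (gr i * gr i))).
    - rewrite rsum_scal. fold (dot n gr gr). rewrite <- (nrm_sq n gr). fold N. field; lra.
    - apply rsum_ext; intros i Hi; destruct (Nat.ltb_spec i n); [field; lra|lia]. }
  set (z := fun i => c i + r / 2 * e i).
  assert (Hz : Om z).
  { apply Hball.
    - intros i Hi. unfold z, e. rewrite (proj1 Hopen c Hc i Hi).
      destruct (Nat.ltb_spec i n); [lia|ring].
    - unfold distn. replace (vsub z c) with (fun i => r / 2 * e i)
        by (apply functional_extensionality; intros; unfold vsub, z; ring).
      rewrite nrm_scal, Hee, Rabs_pos_eq; lra. }
  pose proof (grad_defining_toward_interior x0 z Hx0 Hz) as Hneg. fold gr in Hneg.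
  replace (dot n gr (vsub z x0)) with (- dot n (vsub x0 c) gr + r / 2 * N) in Hneg.
  - assert (0 < r / 2 * N) by (apply Rmult_lt_0_compat; lra). lra.
  - rewrite <- Hge. unfold dot, z, vsub.
    rewrite <- rsum_opp, <- rsum_scal, <- rsum_plus. apply rsum_ext; intros; ring.
Qed.

Lemma dot_outer_normal_pos x0 c :
  bdry_in_Rn n Om x0 -> Om c -> 0 < dot n (vsub x0 c) (outer_normal n D x0).
Proof.
  intros Hx0 Hc. pose proof (grad_defining_outward x0 c Hx0 Hc) as Hpos.
  pose proof (grad_defining_nrm_pos x0 Hx0) as HN.
  set (N := nrm n (fun j => D (j :: nil) x0)) in *.
  replace (dot n (vsub x0 c) (outer_normal n D x0))
    with (/ N * dot n (vsub x0 c) (fun i => D (i :: nil) x0)).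
  - apply Rmult_lt_0_compat; [apply Rinv_0_lt_compat|]; lra.
  - rewrite <- dot_scal_r. unfold dot, outer_normal; apply rsum_ext; intros; fold N; field; lra.
Qed.

End ConvexDomain.

(** * Radial test functions *)

Definition sqdist (n : nat) (c y : pt) : R := dot n (vsub y c) (vsub y c).

Lemma sqdist_nonneg n c y : 0 <= sqdist n c y.
Proof. apply dot_self_nonneg. Qed.

Lemma sqdist_self n x : sqdist n x x = 0.
Proof. unfold sqdist, dot. apply rsum_zero; intros; unfold vsub; ring. Qed.

Lemma sqdist_eq0 n x y : inRn n x -> inRn n y -> sqdist n x y = 0 -> y = x.
Proof.
  intros Hx Hy Hq. apply functional_extensionality; intros i.
  destruct (Nat.lt_ge_cases i n) as [Hi|Hi].
  - assert (Hn : nrm n (vsub y x) = 0) by (unfold nrm; fold (sqdist n x y); rewrite Hq; apply sqrt_0).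
    pose proof (nrm_zero_coord n _ Hn i Hi). unfold vsub in *; lra.
  - rewrite Hx, Hy; auto.
Qed.

Lemma frechet_sqdist n c x : frechet n (sqdist n c) x (fun i => 2 * (x i - c i)).
Proof.
  intros eps Heps. exists eps; split; auto. intros y _ Hd.
  replace (sqdist n c y - sqdist n c x - dot n (fun i => 2 * (x i - c i)) (vsub y x))
    with (distn n y x * distn n y x).
  - pose proof (distn_nonneg n y x).
    rewrite Rabs_pos_eq by nra. apply Rmult_le_compat_r; lra.
  - unfold distn. rewrite nrm_sq. unfold sqdist, dot. rewrite <- !rsum_minus.
    apply rsum_ext; intros; unfold vsub; ring.
Qed.

Lemma frechet_coord_affine n i c x : (i < n)%nat ->
  frechet n (fun y => 2 * (y i - c i)) x (fun j => 2 * ((if Nat.eqb i j then 1 else 0) + 0)).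
Proof.
  intros Hi. apply frechet_scal, frechet_plus; [apply frechet_coord; auto|].
  apply frechet_const.
Qed.

(* Differentiability of [P2] only serves the continuity of the Hessian of
   [Phi (|x - c|^2)]. *)
Definition C2_profile (Phi P1 P2 : R -> R) : Prop := forall t, 0 <= t ->
  derivable_pt_lim Phi t (P1 t) /\ derivable_pt_lim P1 t (P2 t) /\
  exists l, derivable_pt_lim P2 t l.

Definition radial (Phi : R -> R) n c : pt -> R := fun y => Phi (sqdist n c y).

Definition radial_grad (P1 : R -> R) n c : pt -> pt :=
  fun y i => P1 (sqdist n c y) * (2 * (y i - c i)).

Definition radial_hess (P1 P2 : R -> R) n c : pt -> nat -> nat -> R := fun y i j =>
  P2 (sqdist n c y) * (2 * (y j - c j)) * (2 * (y i - c i))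
  + P1 (sqdist n c y) * (if Nat.eqb i j then 2 else 0).

Lemma C2_on_radial Phi P1 P2 n c U : C2_profile Phi P1 P2 ->
  C2_on n U (radial Phi n c) (radial_grad P1 n c) (radial_hess P1 P2 n c).
Proof.
  intros Hprof x _. destruct (Hprof _ (sqdist_nonneg n c x)) as [D0 [D1 [l D2]]].
  split; [|split].
  - apply frechet_comp; auto. apply frechet_sqdist.
  - intros i Hi. unfold radial_grad. eapply frechet_ext_grad.
    2: apply frechet_mult; [apply frechet_comp; [apply frechet_sqdist|apply D1]|].
    2: apply frechet_coord_affine; auto.
    intros j _. unfold radial_hess. cbv beta. destruct (Nat.eqb i j); ring.
  - intros i j Hi Hj. unfold radial_hess. eapply frechet_cont, frechet_plus.
    + apply frechet_mult; [apply frechet_mult|apply frechet_coord_affine; auto].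
      * apply frechet_comp; [apply frechet_sqdist|apply D2].
      * apply frechet_coord_affine; auto.
    + apply frechet_mult; [apply frechet_comp; [apply frechet_sqdist|apply D1]|].
      apply frechet_const.
Qed.

Lemma C2_profile_shift Phi P1 P2 mu :
  C2_profile Phi P1 P2 -> C2_profile (fun t => Phi t + mu) P1 P2.
Proof.
  intros Hprof t Ht. destruct (Hprof t Ht) as [D0 D12]. split; auto.
  replace (P1 t) with (P1 t + 0) by ring.
  apply (derivable_pt_lim_plus Phi (fun _ => mu)); auto. apply derivable_pt_lim_const.
Qed.

Lemma C2_profile_neg_sq : C2_profile (fun t => - (t * t)) (fun t => -2 * t) (fun _ => -2).
Proof.
  intros t _. split; [|split].
  - replace (-2 * t) with (- (1 * t + t * 1)) by ring.
    apply (derivable_pt_lim_opp (fun t => t * t)).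
    apply (derivable_pt_lim_mult id id); apply derivable_pt_lim_id.
  - pose proof (derivable_pt_lim_scal id (-2) t 1 (derivable_pt_lim_id t)) as Hd.
    rewrite Rmult_1_r in Hd. exact Hd.
  - exists 0. apply derivable_pt_lim_const.
Qed.

Lemma C2_plus n U f1 f2 G1 G2 H1 H2 : C2_on n U f1 G1 H1 -> C2_on n U f2 G2 H2 ->
  C2_on n U (fun y => f1 y + f2 y) (fun y i => G1 y i + G2 y i)
    (fun y i j => H1 y i j + H2 y i j).
Proof.
  intros Hf1 Hf2 x Ux. destruct (Hf1 x Ux) as [A1 [A2 A3]]. destruct (Hf2 x Ux) as [B1 [B2 B3]].
  split; [|split].
  - apply frechet_plus; auto.
  - intros i Hi. apply (frechet_plus n (fun y => G1 y i) (fun y => G2 y i)); auto.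
  - intros i j Hi Hj.
    replace (fun y => H1 y i j + H2 y i j) with (fun y => H1 y i j - - H2 y i j)
      by (apply functional_extensionality; intros; ring).
    apply cont_minus, cont_opp; auto.
Qed.

Lemma C2_opp n U f G H : C2_on n U f G H ->
  C2_on n U (fun y => - f y) (fun y i => - G y i) (fun y i j => - H y i j).
Proof.
  intros Hf x Ux. destruct (Hf x Ux) as [A1 [A2 A3]]. split; [|split].
  - apply frechet_opp; auto.
  - intros i Hi. apply (frechet_opp n (fun y => G y i)); auto.
  - intros i j Hi Hj. apply (cont_opp n _ (fun y => H y i j)); auto.
Qed.

Lemma qf_radial n (y : pt) p q :
  qf n (fun i j => q * (2 * y j) * (2 * y i) + p * (if Nat.eqb i j then 2 else 0))
     (fun i => p * (2 * y i))
  = 4 * (p * p) * dot n y y * (4 * q * dot n y y + 2 * p).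
Proof.
  unfold qf.
  transitivity (rsum n (fun i => (16 * q * (p * p) * dot n y y + 8 * (p * p * p)) * (y i * y i))).
  - apply rsum_ext; intros i Hi.
    transitivity (rsum n (fun j => 16 * q * (p * p) * (y i * y i) * (y j * y j)
                    + (if Nat.eqb i j then 8 * (p * p * p) * y i * y j else 0))).
    + apply rsum_ext; intros j _. destruct (Nat.eqb i j); ring.
    + rewrite rsum_plus, rsum_scal, (rsum_delta n (fun j => 8 * (p * p * p) * y i * y j) i Hi).
      fold (dot n y y). ring.
  - rewrite rsum_scal. fold (dot n y y). ring.
Qed.

Lemma Eop_lt_0 n lam s G H :
  0 < qf n H G -> (s < 0 -> lam * Rabs s < nrm n G) -> Eop n lam s G H < 0.
Proof.
  intros Hq Hs. unfold Eop, Fop, Gop, Hop.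
  destruct (Rlt_dec 0 s); [pose proof (Rmin_r (nrm n G - lam * Rabs s) (- qf n H G)); lra|].
  destruct (Rlt_dec s 0) as [Hneg|]; [|lra].
  apply Rmax_lub_lt; [specialize (Hs Hneg)|]; lra.
Qed.

(* [p] and [q] stand for [Phi'] and [Phi''] at [|x0 - c|^2]: the arguments of [Eop] are
   then the gradient and Hessian of [x |-> Phi (|x - c|^2)] at [x0]. *)
Lemma Eop_radial_lt_0 n lam c x0 s p q :
  p < 0 -> 0 < 2 * p + 4 * sqdist n c x0 * q ->
  (s < 0 -> lam * - s < -2 * p * sqrt (sqdist n c x0)) ->
  Eop n lam s (fun i => p * (2 * vsub x0 c i))
    (fun i j => q * (2 * vsub x0 c j) * (2 * vsub x0 c i) + p * (if Nat.eqb i j then 2 else 0))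
  < 0.
Proof.
  intros Hp Hconvex Hsteep. set (S := sqdist n c x0) in *.
  assert (HS : 0 < S).
  { destruct (sqdist_nonneg n c x0) as [|HS0]; [assumption|]. fold S in HS0. rewrite <- HS0 in Hconvex. lra. }
  apply Eop_lt_0.
  - rewrite qf_radial. fold (sqdist n c x0) S.
    apply Rmult_lt_0_compat; [apply Rmult_lt_0_compat|]; nra.
  - intros Hs. rewrite Rabs_left by exact Hs.
    replace (nrm n (fun i => p * (2 * vsub x0 c i))) with (-2 * p * sqrt S); auto.
    replace (fun i => p * (2 * vsub x0 c i)) with (fun i => (2 * p) * vsub x0 c i)
      by (apply functional_extensionality; intros; ring).
    rewrite nrm_scal, Rabs_left by lra. unfold nrm. fold (sqdist n c x0) S. ring.
Qed.

Lemma Eop_opp n lam s G H :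
  Eop n lam (- s) (fun i => - G i) (fun i j => - H i j) = - Eop n lam s G H.
Proof.
  assert (Hn : nrm n (fun i => - G i) = nrm n G).
  { unfold nrm, dot; f_equal; apply rsum_ext; intros; ring. }
  assert (Hq : qf n (fun i j => - H i j) (fun i => - G i) = - qf n H G).
  { unfold qf. rewrite <- rsum_opp. apply rsum_ext; intros.
    rewrite <- rsum_opp. apply rsum_ext; intros; ring. }
  unfold Eop, Fop, Gop, Hop. rewrite Hn, Hq, Rabs_Ropp.
  destruct (Rlt_dec 0 s); destruct (Rlt_dec 0 (- s)); destruct (Rlt_dec s 0);
    destruct (Rlt_dec (- s) 0); try lra;
    rewrite ?Ropp_involutive; unfold Rmin, Rmax; repeat destruct (Rle_dec _ _); lra.
Qed.

(* Subtracting [|y - x0|^4] makes the contact at [x0] strict without changing the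
   gradient and Hessian there. *)
Lemma strict_radial_test n c x0 Phi P1 P2 mu : C2_profile Phi P1 P2 -> inRn n x0 ->
  exists psi G H, (forall U, C2_on n U psi G H) /\
    psi x0 = Phi (sqdist n c x0) + mu /\
    G x0 = (fun i => P1 (sqdist n c x0) * (2 * vsub x0 c i)) /\
    H x0 = (fun i j => P2 (sqdist n c x0) * (2 * vsub x0 c j) * (2 * vsub x0 c i)
                       + P1 (sqdist n c x0) * (if Nat.eqb i j then 2 else 0)) /\
    (forall y, inRn n y -> y <> x0 -> psi y < Phi (sqdist n c y) + mu).
Proof.
  intros Hprof Hx0.
  exists (fun y => radial (fun t => Phi t + mu) n c y + radial (fun t => - (t * t)) n x0 y),
    (fun y i => radial_grad P1 n c y i + radial_grad (fun t => -2 * t) n x0 y i),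
    (fun y i j => radial_hess P1 P2 n c y i j
                  + radial_hess (fun t => -2 * t) (fun _ => -2) n x0 y i j).
  split; [|unfold radial, radial_grad, radial_hess; rewrite sqdist_self; split; [|split; [|split]]].
  - intros U. apply C2_plus; apply C2_on_radial;
      [apply C2_profile_shift; auto|apply C2_profile_neg_sq].
  - ring.
  - apply functional_extensionality; intros i. unfold vsub; ring.
  - apply functional_extensionality; intros i; apply functional_extensionality; intros j.
    unfold vsub. destruct (Nat.eqb i j); ring.
  - intros y Hy Hne.
    assert (0 < sqdist n x0 y).
    { destruct (sqdist_nonneg n x0 y) as [|Hq]; auto.
      exfalso; apply Hne, (sqdist_eq0 n); auto. }
    nra.
Qed.


(** * Cone profiles *)

Lemma C2_profile_cone a k e h : 0 < h ->
  C2_profile (fun t => a - k * sqrt (t + h) + e * t) (fun t => - k / (2 * sqrt (t + h)) + e)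
    (fun t => k / (4 * (t + h) * sqrt (t + h))).
Proof.
  intros Hh t Ht. assert (Hs : 0 < sqrt (t + h)) by (apply sqrt_lt_R0; lra).
  pose proof (sqrt_sqrt (t + h) ltac:(lra)) as Hss.
  split; [|split].
  - apply is_derive_Reals. auto_derive; [lra|field; lra].
  - apply is_derive_Reals. auto_derive.
    + repeat split; try lra; apply Rgt_not_eq, Rmult_lt_0_compat; lra.
    + set (s := sqrt (t + h)) in *. rewrite <- Hss. field. lra.
  - eexists. apply is_derive_Reals. auto_derive; [|reflexivity].
    repeat split; try lra; apply Rgt_not_eq; repeat apply Rmult_lt_0_compat; lra.
Qed.

(* In the cone lemmas below, the profile is
     [Phi t = a - k sqrt (t + eta^2) + eps t]  with  [eps = k eta^2 / rr^3];
   [rr] is the radius of the ball around the vertex on which [w > a] is known. *)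

Lemma cone_near a k rr eta s : 0 < k -> 0 < eta <= rr -> 0 <= s < rr * rr ->
  a - k * sqrt (s + eta * eta) + k * (eta * eta) / (rr * rr * rr) * s <= a.
Proof.
  intros Hk Heta Hs.
  assert (eta <= sqrt (s + eta * eta)) by (apply le_sqrt_of_sq_le; lra).
  assert (k * (eta * eta) / (rr * rr * rr) * s <= k * eta).
  { apply Rle_trans with (k * (eta * eta) / (rr * rr * rr) * (rr * rr)).
    - apply Rmult_le_compat_l; [apply Rmult_le_pos; [nra|]; apply Rlt_le, Rinv_0_lt_compat|]; nra.
    - replace (k * (eta * eta) / (rr * rr * rr) * (rr * rr)) with (k * eta * (eta / rr))
        by (field; lra).
      rewrite <- (Rmult_1_r (k * eta)) at 2. apply Rmult_le_compat_l; [nra|].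
      apply Rmult_le_reg_r with rr; [lra|]. field_simplify; lra. }
  assert (k * eta <= k * sqrt (s + eta * eta)) by (apply Rmult_le_compat_l; lra).
  lra.
Qed.

Section ConeFar.
Variables (k rr Dm eta s : R).
Hypothesis Hk : 0 < k.
Hypothesis Hrr : 0 < rr.
Hypothesis Heta : 0 < eta <= 1.
Hypothesis Hs : rr * rr <= s.
Hypothesis HsD : sqrt s <= Dm.

Let W := sqrt (s + eta * eta).
Let eps := k * (eta * eta) / (rr * rr * rr).

Let Hrr3 : 0 < rr * rr * rr.
Proof. repeat apply Rmult_lt_0_compat; lra. Qed.

Let Heps : 0 < eps.
Proof. apply Rdiv_lt_0_compat; [apply Rmult_lt_0_compat|]; nra. Qed.

Lemma cone_W_sq : W * W = s + eta * eta.
Proof. apply sqrt_sqrt; nra. Qed.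

Lemma cone_W_ge : rr <= W.
Proof. apply le_sqrt_of_sq_le; nra. Qed.

Lemma cone_far_decreasing : eta <= rr * rr * rr / (4 * (Dm + 1)) -> - k / (2 * W) + eps < 0.
Proof.
  intros Heta'. pose proof cone_W_ge. pose proof Hrr3.
  assert (HDm : 0 <= Dm) by (pose proof (sqrt_pos s); lra).
  assert (HW : W <= Dm + 1) by (pose proof (sqrt_plus_sq_le s eta ltac:(nra) ltac:(lra)); unfold W; lra).
  assert (eps <= k / (4 * (Dm + 1))).
  { unfold eps. apply Rle_trans with (k * eta / (rr * rr * rr)).
    - unfold Rdiv. apply Rmult_le_compat_r; [apply Rlt_le, Rinv_0_lt_compat; lra|].
      apply Rmult_le_compat_l; nra.
    - apply Rmult_le_reg_r with (rr * rr * rr); [nra|].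
      replace (k * eta / (rr * rr * rr) * (rr * rr * rr)) with (k * eta) by (field; lra).
      apply Rle_trans with (k * (rr * rr * rr / (4 * (Dm + 1)))); [apply Rmult_le_compat_l; lra|].
      right; field; lra. }
  assert (k / (4 * (Dm + 1)) < k / (2 * W)).
  { apply Rmult_lt_compat_l; [lra|]. apply Rinv_lt_contravar; nra. }
  lra.
Qed.

Lemma cone_far_convex :
  0 < 2 * (- k / (2 * W) + eps) + 4 * s * (k / (4 * (s + eta * eta) * W)).
Proof.
  pose proof cone_W_ge. pose proof cone_W_sq. pose proof Hrr3.
  replace (2 * (- k / (2 * W) + eps) + 4 * s * (k / (4 * (s + eta * eta) * W)))
    with (2 * eps - k * (eta * eta) / (W * W * W))
    by (rewrite <- cone_W_sq; replace s with (W * W - eta * eta) at 1 by lra; field; lra).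
  assert (Hcube : rr * rr * rr <= W * W * W)
    by (apply Rmult_le_compat; [nra|lra|apply Rmult_le_compat|]; lra).
  assert (k * (eta * eta) / (W * W * W) <= eps).
  { unfold eps, Rdiv. apply Rmult_le_compat_l; [apply Rmult_le_pos; nra|].
    apply Rinv_le_contravar; lra. }
  pose proof Heps. lra.
Qed.

Lemma cone_far_steep lamA :
  eta * eta * (k / (rr * rr) + 2 * k * Dm / (rr * rr * rr)) < k - lamA ->
  lamA < -2 * (- k / (2 * W) + eps) * sqrt s.
Proof.
  intros Hsmall. pose proof cone_W_ge. pose proof cone_W_sq. pose proof Hrr3.
  set (r := sqrt s) in *. assert (Hr : rr <= r) by (apply le_sqrt_of_sq_le; lra).
  assert (Hrs : r * r = s) by (apply sqrt_sqrt; nra).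
  assert (HrW : r <= W) by (apply sqrt_le_1_alt; nra).
  replace (-2 * (- k / (2 * W) + eps) * r) with (k * (r / W) - 2 * eps * r) by (field; lra).
  (* [r / W >= (r / W)^2 = 1 - eta^2 / W^2 >= 1 - eta^2 / rr^2] *)
  assert (Hratio : 1 - eta * eta / (rr * rr) <= r / W).
  { assert (Hq : r / W <= 1) by (apply Rmult_le_reg_r with W; [lra|]; field_simplify; lra).
    assert (0 <= r / W) by (apply Rmult_le_pos; [|apply Rlt_le, Rinv_0_lt_compat]; lra).
    assert (r / W * (r / W) = 1 - eta * eta / (W * W))
      by (replace (r / W * (r / W)) with (r * r / (W * W)) by (field; lra);
          rewrite Hrs, cone_W_sq; field; nra).
    assert (eta * eta / (W * W) <= eta * eta / (rr * rr)).
    { unfold Rdiv. apply Rmult_le_compat_l; [nra|]. apply Rinv_le_contravar; nra. }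
    nra. }
  assert (2 * eps * r <= 2 * eps * Dm) by (pose proof Heps; apply Rmult_le_compat_l; lra).
  assert (k * (1 - eta * eta / (rr * rr)) <= k * (r / W)) by (apply Rmult_le_compat_l; lra).
  replace (eta * eta * (k / (rr * rr) + 2 * k * Dm / (rr * rr * rr)))
    with (k * (eta * eta / (rr * rr)) + 2 * eps * Dm) in Hsmall by (unfold eps; field; lra).
  lra.
Qed.

End ConeFar.

(** * Supersolutions lie above cones *)

(* The test-function clauses of [visc_super], without the semicontinuity requirement. *)
Definition super_interior n Om lam (u : pt -> R) : Prop :=
  forall x0 phi G H, Om x0 -> C2_on n Om phi G H -> phi x0 = u x0 ->
    (forall x, Om x -> x <> x0 -> u x > phi x) ->
    Eop n lam (phi x0) (G x0) (H x0) >= 0.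

Definition super_boundary n Om lam nu (u : pt -> R) : Prop :=
  forall x0 (V : pt -> Prop) phi G H, bdry_in_Rn n Om x0 ->
    open_in_Rn n V -> (forall x, clos_in_Rn n Om x -> V x) -> C2_on n V phi G H ->
    phi x0 = u x0 ->
    (forall x, clos_in_Rn n Om x -> x <> x0 -> u x > phi x) ->
    Rmax (Eop n lam (phi x0) (G x0) (H x0)) (dot n (G x0) (nu x0)) >= 0.

Lemma visc_sub_opp_interior n Om lam nu u :
  visc_sub n Om lam nu u -> super_interior n Om lam (fun y => - u y).
Proof.
  intros [_ [Hsub_int _]] x0 phi G H Hx0 HC Heq Hlt.
  assert (Eop n lam (- phi x0) (fun i => - G x0 i) (fun i j => - H x0 i j) <= 0).
  { apply (Hsub_int x0 (fun y => - phi y) (fun y i => - G y i) (fun y i j => - H y i j));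
      auto using C2_opp; [rewrite Heq; ring|].
    intros x Hx Hne. specialize (Hlt x Hx Hne). lra. }
  rewrite Eop_opp in *. lra.
Qed.

Lemma visc_sub_opp_boundary n Om lam nu u :
  visc_sub n Om lam nu u -> super_boundary n Om lam nu (fun y => - u y).
Proof.
  intros [_ [_ Hbd]] x0 V phi G H Hx0 HV HKV HC Heq Hlt.
  assert (Rmin (Eop n lam (- phi x0) (fun i => - G x0 i) (fun i j => - H x0 i j))
            (dot n (fun i => - G x0 i) (nu x0)) <= 0).
  { apply (Hbd x0 V (fun y => - phi y) (fun y i => - G y i) (fun y i j => - H y i j));
      auto using C2_opp; [rewrite Heq; ring|].
    intros x Hx Hne. specialize (Hlt x Hx Hne). lra. }
  rewrite Eop_opp, dot_opp_l in *. unfold Rmin, Rmax in *.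
  repeat destruct (Rle_dec _ _); lra.
Qed.

Section Supersolution.
Variables (n : nat) (Om : pt -> Prop) (rho : pt -> R) (D : list nat -> pt -> R).
Variables (lam B : R) (w : pt -> R).
Hypothesis Hopen : open_in_Rn n Om.
Hypothesis Hconv : convex_in_Rn n Om.
Hypothesis Hdef : defining_fn n Om rho D.
Hypothesis HB : forall x, Om x -> nrm n x <= B.
Hypothesis Hcont : forall x, clos_in_Rn n Om x -> cont_at n (clos_in_Rn n Om) w x.
Hypothesis Hsuper_int : super_interior n Om lam w.
Hypothesis Hsuper_bdry : super_boundary n Om lam (outer_normal n D) w.

(* The conditions on [P1] and [P2] at [x0] say that [Phi (|x - c|^2)] decreases in
   [|x - c|], is radially convex, and is steeper than [lam |w x0|]. *)
Lemma no_radial_touching c x0 Phi P1 P2 :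
  Om c -> C2_profile Phi P1 P2 -> clos_in_Rn n Om x0 ->
  (forall x, clos_in_Rn n Om x ->
     w x0 - Phi (sqdist n c x0) <= w x - Phi (sqdist n c x)) ->
  P1 (sqdist n c x0) < 0 ->
  0 < 2 * P1 (sqdist n c x0) + 4 * sqdist n c x0 * P2 (sqdist n c x0) ->
  (w x0 < 0 -> lam * - w x0 < -2 * P1 (sqdist n c x0) * sqrt (sqdist n c x0)) ->
  False.
Proof.
  intros Hc Hprof Kx0 Hmin HP1 Hconvex Hsteep. set (S0 := sqdist n c x0) in *.
  destruct (strict_radial_test n c x0 Phi P1 P2 (w x0 - Phi S0) Hprof (proj1 Kx0))
    as [psi [G [H [HC2 [Hpsi0 [HG0 [HH0 Hlt]]]]]]].
  fold S0 in Hpsi0, HG0, HH0. replace (Phi S0 + (w x0 - Phi S0)) with (w x0) in Hpsi0 by ring.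
  assert (HE : Eop n lam (psi x0) (G x0) (H x0) < 0)
    by (rewrite Hpsi0, HG0, HH0; apply Eop_radial_lt_0; auto).
  assert (Hstrict : forall y, clos_in_Rn n Om y -> y <> x0 -> w y > psi y).
  { intros y Ky Hne. specialize (Hmin y Ky). specialize (Hlt y (proj1 Ky) Hne). lra. }
  destruct (classic (Om x0)) as [HOm|HnOm].
  - assert (Eop n lam (psi x0) (G x0) (H x0) >= 0); [|lra].
    apply Hsuper_int; auto. intros y Hy Hne. apply Hstrict; auto. apply closure_of_mem; auto.
  - assert (Hbd : bdry_in_Rn n Om x0) by (split; auto).
    assert (Hdot : dot n (G x0) (outer_normal n D x0) < 0).
    { replace (G x0) with (fun i => 2 * P1 S0 * vsub x0 c i)
        by (rewrite HG0; apply functional_extensionality; intros; ring).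
      rewrite dot_scal_l.
      pose proof (dot_outer_normal_pos n Om Hopen Hconv rho D Hdef x0 c Hbd Hc). nra. }
    assert (Rmax (Eop n lam (psi x0) (G x0) (H x0)) (dot n (G x0) (outer_normal n D x0)) >= 0);
      [|pose proof (Rmax_lub_lt _ _ _ HE Hdot); lra].
    apply (Hsuper_bdry x0 (inRn n)); auto.
    + split; auto. intros y _. exists 1; split; [lra|auto].
    + intros y Ky; apply Ky.
Qed.

Lemma radial_comparison c Phi P1 P2 r0 : Om c -> C2_profile Phi P1 P2 ->
  (forall x, clos_in_Rn n Om x -> sqdist n c x < r0 -> Phi (sqdist n c x) < w x) ->
  (forall x, clos_in_Rn n Om x -> r0 <= sqdist n c x ->
     P1 (sqdist n c x) < 0 /\
     0 < 2 * P1 (sqdist n c x) + 4 * sqdist n c x * P2 (sqdist n c x) /\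
     (w x < 0 -> lam * - w x < -2 * P1 (sqdist n c x) * sqrt (sqdist n c x))) ->
  forall x, clos_in_Rn n Om x -> Phi (sqdist n c x) <= w x.
Proof.
  intros Hc Hprof Hnear Hfar x Kx. apply Rnot_lt_le; intros Hlt.
  destruct (closure_cont_attains_min n Om B HB (fun y => w y - Phi (sqdist n c y)))
    as [x0 [Kx0 Hmin]]; [exists x; auto| |].
  { intros y Ky. apply cont_minus; auto.
    destruct (Hprof _ (sqdist_nonneg n c y)) as [DPhi _].
    apply cont_at_subset with (inRn n); [intros z Kz; apply Kz|].
    eapply frechet_cont, frechet_comp; [apply frechet_sqdist|apply DPhi]. }
  assert (Hneg : w x0 - Phi (sqdist n c x0) < 0) by (specialize (Hmin x Kx); lra).
  destruct (Rlt_le_dec (sqdist n c x0) r0) as [Hn|Hf].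
  - specialize (Hnear x0 Kx0 Hn). lra.
  - destruct (Hfar x0 Kx0 Hf) as [HP1 [Hconvex Hsteep]].
    apply (no_radial_touching c x0 Phi P1 P2); auto.
Qed.


Lemma cone_below_up_to c a k rr A Dm eta : Om c -> 0 < rr -> 0 < k -> 0 <= lam ->
  0 < eta <= 1 -> eta <= rr -> eta <= rr * rr * rr / (4 * (Dm + 1)) ->
  eta * eta * (k / (rr * rr) + 2 * k * Dm / (rr * rr * rr)) < k - lam * A ->
  (forall x, clos_in_Rn n Om x -> - w x <= A) ->
  (forall x, clos_in_Rn n Om x -> distn n x c <= Dm) ->
  (forall x, clos_in_Rn n Om x -> distn n x c < rr -> a < w x) ->
  forall x, clos_in_Rn n Om x -> a - k * (distn n x c + eta) <= w x.
Proof.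
  intros Hc Hrr Hk Hlam Heta Hetarr Hetab1 Hsmall HA HDm Hnear x Kx.
  assert (Hrr3 : 0 < rr * rr * rr) by (repeat apply Rmult_lt_0_compat; lra).
  assert (Hcmp := radial_comparison c
    (fun t => a - k * sqrt (t + eta * eta) + k * (eta * eta) / (rr * rr * rr) * t)
    (fun t => - k / (2 * sqrt (t + eta * eta)) + k * (eta * eta) / (rr * rr * rr))
    (fun t => k / (4 * (t + eta * eta) * sqrt (t + eta * eta))) (rr * rr) Hc
    (C2_profile_cone a k _ (eta * eta) ltac:(nra))).
  cbv beta in Hcmp.
  assert (Hw : a - k * sqrt (sqdist n c x + eta * eta)
               + k * (eta * eta) / (rr * rr * rr) * sqdist n c x <= w x).
  { apply Hcmp; auto.
    - intros y Ky Hy. pose proof (sqdist_nonneg n c y).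
      assert (distn n y c < rr) by (apply sqrt_lt_of_lt_sq; auto).
      pose proof (cone_near a k rr eta (sqdist n c y) Hk ltac:(lra) ltac:(lra)).
      specialize (Hnear y Ky ltac:(assumption)). lra.
    - intros y Ky Hy. pose proof (HDm y Ky) as HsD.
      split; [|split].
      + apply cone_far_decreasing with Dm; auto.
      + apply cone_far_convex; auto.
      + intros _. assert (lam * - w y <= lam * A) by (apply Rmult_le_compat_l; auto).
        enough (lam * A < -2 * (- k / (2 * sqrt (sqdist n c y + eta * eta))
                                + k * (eta * eta) / (rr * rr * rr)) * sqrt (sqdist n c y)) by lra.
        apply cone_far_steep with Dm; auto. }
  pose proof (sqrt_plus_sq_le (sqdist n c x) eta (sqdist_nonneg n c x) ltac:(lra)).
  assert (0 <= k * (eta * eta) / (rr * rr * rr) * sqdist n c x).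
  { apply Rmult_le_pos; [|apply sqdist_nonneg].
    apply Rlt_le, Rdiv_lt_0_compat; [apply Rmult_lt_0_compat|]; nra. }
  change (distn n x c) with (sqrt (sqdist n c x)). nra.
Qed.

Lemma cone_below c a k rr A Dm : Om c -> 0 < rr -> 0 < k -> 0 <= lam -> lam * A < k ->
  (forall x, clos_in_Rn n Om x -> - w x <= A) ->
  (forall x, clos_in_Rn n Om x -> distn n x c <= Dm) ->
  (forall x, clos_in_Rn n Om x -> distn n x c < rr -> a < w x) ->
  forall x, clos_in_Rn n Om x -> a - k * distn n x c <= w x.
Proof.
  intros Hc Hrr Hk Hlam HkA HA HDm Hnear x Kx.
  assert (HDm0 : 0 <= Dm).
  { pose proof (HDm c (closure_of_mem n Om Hopen c Hc)). rewrite distn_self in *. lra. }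
  set (den := k / (rr * rr) + 2 * k * Dm / (rr * rr * rr)).
  assert (Hden : 0 < den).
  { assert (0 < k / (rr * rr)) by (apply Rdiv_lt_0_compat; nra).
    assert (0 <= 2 * k * Dm / (rr * rr * rr)); [|unfold den; lra].
    apply Rmult_le_pos; [nra|]. apply Rlt_le, Rinv_0_lt_compat.
    repeat apply Rmult_lt_0_compat; lra. }
  set (b1 := rr * rr * rr / (4 * (Dm + 1))). set (b2 := (k - lam * A) / (2 * den)).
  assert (0 < b1 /\ 0 < b2) as [Hb1 Hb2].
  { split; apply Rdiv_lt_0_compat; try lra. repeat apply Rmult_lt_0_compat; lra. }
  assert (exists eta0, 0 < eta0 <= 1 /\ eta0 <= rr /\ eta0 <= b1 /\ eta0 <= b2) as [eta0 Heta0].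
  { exists (Rmin (Rmin 1 rr) (Rmin b1 b2)).
    pose proof (Rmin_l (Rmin 1 rr) (Rmin b1 b2)); pose proof (Rmin_r (Rmin 1 rr) (Rmin b1 b2)).
    pose proof (Rmin_l 1 rr); pose proof (Rmin_r 1 rr); pose proof (Rmin_l b1 b2);
      pose proof (Rmin_r b1 b2).
    assert (0 < Rmin (Rmin 1 rr) (Rmin b1 b2)) by (repeat apply Rmin_pos; lra). lra. }
  apply (le_of_le_plus_small _ _ (k * eta0)); [nra|]. intros e He.
  set (eta := e / k).
  assert (Heta : 0 < eta < eta0).
  { unfold eta; split; [apply Rdiv_lt_0_compat; lra|].
    apply Rmult_lt_reg_r with k; [lra|]. field_simplify; lra. }
  assert (Hsmall : eta * eta * den < k - lam * A).
  { apply Rle_lt_trans with (eta * den); [apply Rmult_le_compat_r; nra|].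
    apply Rle_lt_trans with (b2 * den); [apply Rmult_le_compat_r; lra|].
    unfold b2. replace ((k - lam * A) / (2 * den) * den) with ((k - lam * A) / 2) by (field; lra).
    lra. }
  replace e with (k * eta) by (unfold eta; field; lra).
  pose proof (cone_below_up_to c a k rr A Dm eta Hc Hrr Hk Hlam ltac:(lra) ltac:(lra)
                ltac:(fold b1; lra) Hsmall HA HDm Hnear x Kx).
  lra.
Qed.

Lemma oscillation_bound x1 x2 diam : 0 < lam ->
  clos_in_Rn n Om x1 -> clos_in_Rn n Om x2 ->
  (forall x, clos_in_Rn n Om x -> w x <= w x1) ->
  (forall x, clos_in_Rn n Om x -> w x2 <= w x) ->
  (forall x y, clos_in_Rn n Om x -> clos_in_Rn n Om y -> distn n x y <= diam) ->
  w x1 - w x2 <= lam * Rmax 0 (- w x2) * diam.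
Proof.
  intros Hlam K1 K2 Hmax Hmin Hdiam.
  assert (Hdiam0 : 0 <= diam) by (pose proof (Hdiam x1 x1 K1 K1); rewrite distn_self in *; lra).
  apply le_mult_of_forall_gt; auto. intros k Hk.
  assert (Hk0 : 0 < k) by (assert (0 <= lam * Rmax 0 (- w x2)) by (apply Rmult_le_pos; [lra|apply Rmax_l]); lra).
  apply Rle_plus_epsilon. intros e He. set (delta := e / (1 + k)).
  assert (Hdelta : 0 < delta) by (apply Rdiv_lt_0_compat; lra).
  destruct (Hcont x1 K1 delta Hdelta) as [r [Hr Hclose]].
  destruct (proj2 K1 (Rmin (r / 2) delta)) as [c [Hc Hdc]]; [apply Rmin_pos; lra|].
  apply Rmin_Rgt_l in Hdc as [Hdc1 Hdc2].
  (* compare [w] with the cone of slope [k] whose vertex [c] is close to the maximum point *)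
  assert (Hcone := cone_below c (w x1 - delta) k (r / 2) (Rmax 0 (- w x2)) diam Hc ltac:(lra) Hk0
                     ltac:(lra) Hk).
  specialize (Hcone ltac:(intros x Kx; specialize (Hmin x Kx); pose proof (Rmax_r 0 (- w x2)); lra)).
  specialize (Hcone ltac:(intros x Kx; apply Hdiam; auto; apply closure_of_mem; auto)).
  specialize (Hcone ltac:(intros x Kx Hx; pose proof (distn_triang n x c x1);
                          specialize (Hclose x Kx ltac:(lra)); apply Rabs_def2 in Hclose; lra)).
  specialize (Hcone x2 K2).
  pose proof (distn_triang n x2 x1 c). rewrite (distn_sym n x1 c) in *.
  pose proof (Hdiam x2 x1 K2 K1).
  replace e with (delta * (1 + k)) by (unfold delta; field; lra).
  nra.
Qed.

End Supersolution.

Lemma two_div_le_of_oscillation M m lam diam : m < M -> 0 <= diam -> 0 < lam ->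
  M - m <= lam * Rmax 0 (- m) * diam -> M - m <= lam * Rmax 0 M * diam -> 2 / diam <= lam.
Proof.
  intros HmM Hdiam Hlam H1 H2.
  assert (Hm : 0 < - m).
  { apply Rnot_le_lt; intros Hle. rewrite Rmax_left in H1 by lra. lra. }
  assert (HM : 0 < M).
  { apply Rnot_le_lt; intros Hle. rewrite Rmax_left in H2 by lra. lra. }
  rewrite Rmax_right in H1, H2 by lra.
  assert (Hd : 0 < diam) by (destruct Hdiam as [|<-]; [auto|rewrite Rmult_0_r in H1; lra]).
  (* [M - m >= 2 min (M, -m)] *)
  assert (Hld : 2 <= lam * diam).
  { destruct (Rle_dec (- m) M).
    - apply Rmult_le_reg_r with (- m); nra.
    - apply Rmult_le_reg_r with M; nra. }
  apply Rmult_le_reg_r with diam; auto. unfold Rdiv. rewrite Rmult_assoc, Rinv_l; lra.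
Qed.

Theorem proposition1 (n : nat) (Om : pt -> Prop) (rho : pt -> R)
    (Drho : list nat -> pt -> R) (lam : R) (u : pt -> R) :
  open_in_Rn n Om -> bounded_in_Rn n Om -> convex_in_Rn n Om ->
  defining_fn n Om rho Drho ->
  0 < lam ->
  visc_solution n Om lam (outer_normal n Drho) u ->
  (exists x y, clos_in_Rn n Om x /\ clos_in_Rn n Om y /\ u x <> u y) ->
  forall diam, is_lub (fun r => exists x y, Om x /\ Om y /\ r = distn n x y) diam ->
  2 / diam <= lam.
Proof.
  intros Hopen [B HB] Hconv Hdef Hlam [Hcont [Hsub [_ [Hsup_int Hsup_bdry]]]]
    [xa [xb [Ka [Kb Hne]]]] diam Hlub.
  pose proof (closure_distn_le_lub n Om diam Hlub) as Hdiam.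
  assert (Hcont' : forall x, clos_in_Rn n Om x -> cont_at n (clos_in_Rn n Om) (fun y => - u y) x)
    by (intros; apply cont_opp; auto).
  destruct (closure_cont_attains_min n Om B HB (fun y => - u y) (ex_intro _ xa Ka) Hcont')
    as [x1 [K1 Hmax]].
  destruct (closure_cont_attains_min n Om B HB u (ex_intro _ xa Ka) Hcont) as [x2 [K2 Hmin]].
  apply (two_div_le_of_oscillation (u x1) (u x2)); auto.
  - pose proof (Hmax xa Ka); pose proof (Hmax xb Kb); pose proof (Hmin xa Ka); pose proof (Hmin xb Kb).
    apply Rnot_le_lt; intros Hle. apply Hne. lra.
  - pose proof (Hdiam xa xa Ka Ka). rewrite distn_self in *. lra.
  - apply (oscillation_bound n Om rho Drho lam B u); auto.
    intros x Kx; specialize (Hmax x Kx); lra.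
  - rewrite <- (Ropp_involutive (u x1)) at 2.
    replace (u x1 - u x2) with (- u x2 - - u x1) by ring.
    apply (oscillation_bound n Om rho Drho lam B (fun y => - u y)); auto.
    + apply visc_sub_opp_interior with (nu := outer_normal n Drho); auto.
    + apply visc_sub_opp_boundary; auto.
    + intros x Kx; specialize (Hmin x Kx); lra.
Qed.
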